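(* Consider the compound MAC model with arbitrarily correlated sources $(S_1,S_2)$ and receiver side information $(W_1,W_2)$. Source-channel rate $b$ is achievable if there exist a random variable $Q$ with $|\mathcal{Q}|\le4$ and an input distribution $p(q,x_1,x_2)=p(q)p(x_1|q)p(x_2|q)$ such that for $k=1,2$: $$H(S_1|S_2,W_k)<b\,I(X_1;Y_k|X_2,Q),\quad H(S_2|S_1,W_k)<b\,I(X_2;Y_k|X_1,Q),\quad H(S_1,S_2|W_k)<b\,I(X_1,X_2;Y_k|Q).$$
   Context: Compound MAC model: $\{(S_{1,k},S_{2,k},W_{1,k},W_{2,k})\}_{k\ge1}$ i.i.d. $\sim p(s_1,s_2,w_1,w_2)$ on finite alphabets. Transmitter $i\in\{1,2\}$ observes $S_i^m$ and sends $X_i^n=f_i^{(m,n)}(S_i^m)$. The channel $p(y_1,y_2|x_1,x_2)$ is discrete memoryless with finite alphabets. Receiver $k\in\{1,2\}$ observes $(Y_k^n,W_k^m)$ and outputs $(\hat S_{k,1}^m,\hat S_{k,2}^m)=g_k^{(m,n)}(Y_k^n,W_k^m)$, an estimate of both sources. Error probability $P_e^{(m,n)}=\Pr\{\bigcup_{k=1,2}\{(S_1^m,S_2^m)\neq(\hat S_{k,1}^m,\hat S_{k,2}^m)\}\}$. Rate $b$ is achievable if for every $\epsilon>0$ there exist positive integers $m,n$ with $n/m=b$ and encoders/decoders with $P_e^{(m,n)}<\epsilon$. *)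

From mathcomp Require Import all_boot.
From Stdlib Require Import Reals.
Set Implicit Arguments. Unset Strict Implicit. Unset Printing Implicit Defensive.

Open Scope R_scope.

Definition rsum (T : finType) (f : T -> R) : R :=
  List.fold_right Rplus 0 (List.map f (enum T)).
Definition rprod (T : finType) (f : T -> R) : R :=
  List.fold_right Rmult 1 (List.map f (enum T)).

Definition is_pmf (T : finType) (f : T -> R) : Prop :=
  (forall t, 0 <= f t) /\ rsum f = 1.

Definition marg (T U : finType) (p : T -> R) (g : T -> U) (u : U) : R :=
  rsum (fun t => if g t == u then p t else 0).

(* Terms with p(t) = 0 vanish. *)
Definition cond_entropy (T U V : finType) (p : T -> R) (A : T -> U) (B : T -> V) : R :=
  - rsum (fun t => p t * ln (marg p (fun s => (A s, B s)) (A t, B t)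
                              / marg p B (B t))).

Definition cond_mutinf (T U V Z : finType) (p : T -> R)
    (A : T -> U) (C : T -> Z) (B : T -> V) : R :=
  cond_entropy p C B - cond_entropy p C (fun t => (A t, B t)).

(* Source letter: ((s1, s2), w1), w2 *)
Definition src (S1 S2 W1 W2 : finType) : finType := (S1 * S2 * W1 * W2)%type.

Definition err_prob (S1 S2 W1 W2 X1 X2 Y1 Y2 : finType)
    (p : src S1 S2 W1 W2 -> R) (W : X1 -> X2 -> (Y1 * Y2)%type -> R)
    (m n : nat)
    (f1 : {ffun 'I_m -> S1} -> {ffun 'I_n -> X1})
    (f2 : {ffun 'I_m -> S2} -> {ffun 'I_n -> X2})
    (g1 : {ffun 'I_n -> Y1} -> {ffun 'I_m -> W1} ->
          ({ffun 'I_m -> S1} * {ffun 'I_m -> S2})%type)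
    (g2 : {ffun 'I_n -> Y2} -> {ffun 'I_m -> W2} ->
          ({ffun 'I_m -> S1} * {ffun 'I_m -> S2})%type) : R :=
  rsum (fun u : {ffun 'I_m -> src S1 S2 W1 W2} =>
    let s1 := [ffun i => (u i).1.1.1] in
    let s2 := [ffun i => (u i).1.1.2] in
    let w1 := [ffun i => (u i).1.2] in
    let w2 := [ffun i => (u i).2] in
    let x1 := f1 s1 in
    let x2 := f2 s2 in
    rprod (fun i => p (u i)) *
    rsum (fun y : {ffun 'I_n -> (Y1 * Y2)%type} =>
      let y1 := [ffun j => (y j).1] in
      let y2 := [ffun j => (y j).2] in
      rprod (fun j => W (x1 j) (x2 j) (y j)) *
      (if (g1 y1 w1 == (s1, s2)) && (g2 y2 w2 == (s1, s2)) then 0 else 1))).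

Definition achievable (S1 S2 W1 W2 X1 X2 Y1 Y2 : finType)
    (p : src S1 S2 W1 W2 -> R) (W : X1 -> X2 -> (Y1 * Y2)%type -> R) (b : R) : Prop :=
  forall eps, 0 < eps ->
  exists (m n : nat), (0 < m)%nat /\ (0 < n)%nat /\ INR n / INR m = b /\
  exists f1 f2 g1 g2, @err_prob S1 S2 W1 W2 X1 X2 Y1 Y2 p W m n f1 f2 g1 g2 < eps.

Definition in_joint (Q X1 X2 Y1 Y2 : finType) (pq : Q -> R)
    (px1 : Q -> X1 -> R) (px2 : Q -> X2 -> R) (W : X1 -> X2 -> (Y1 * Y2)%type -> R)
    (t : (Q * X1 * X2 * (Y1 * Y2))%type) : R :=
  let: (q, x1, x2, y) := t in pq q * px1 q x1 * px2 q x2 * W x1 x2 y.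

(* Every source block s^m is mapped by user i to an independent codeword
   X_i^n(s_i^m) drawn i.i.d. from p(x_i|q_j) along a time-sharing sequence
   q^n drawn i.i.d. from p(q).  Receiver k accepts a candidate (a1, a2) when
   three "information densities" -- one for each error type (a1 wrong,
   a2 wrong, both wrong) -- each exceed the threshold m*th.  A density is the
   product of the conditional source probability of the candidate given the
   side information and the channel likelihood ratio of its codewords, so
   its logarithm is a sum of i.i.d. terms whose mean is
   m * (-H(source part | rest)) + n * I(inputs; Y_k | rest).
   The decoding error splits into
   - the true pair failing one test: by Chebyshev's inequality applied to the
     i.i.d. sum (lemma [tail_bound]) this is O(1/m) under the rate conditions;
   - some wrong pair passing a test: by Markov's inequality and the
     independence of the codewords of distinct messages this is at most
     exp(-m th) (lemmas [false_accept_first], [..._second], [..._both]). *)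
From HB Require Import structures.
From mathcomp Require Import all_boot.
From Stdlib Require Import Reals Lra Classical.
Set Implicit Arguments. Unset Strict Implicit. Unset Printing Implicit Defensive.
Open Scope R_scope.

Lemma Rplus_0_l_id : left_id 0 Rplus. Proof. move=> x; lra. Qed.
Lemma Rmult_1_l_id : left_id 1 Rmult. Proof. move=> x; lra. Qed.
Lemma Rplus_assoc_law : associative Rplus. Proof. move=> x y z; lra. Qed.
Lemma Rplus_comm_law : commutative Rplus. Proof. move=> x y; lra. Qed.
Lemma Rmult_assoc_law : associative Rmult. Proof. move=> x y z; ring. Qed.
Lemma Rmult_comm_law : commutative Rmult. Proof. move=> x y; ring. Qed.
Lemma Rmult_0_l_zero : left_zero 0 Rmult. Proof. move=> x; ring. Qed.
Lemma Rmult_0_r_zero : right_zero 0 Rmult. Proof. move=> x; ring. Qed.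
Lemma Rmult_plus_distr_l_law : left_distributive Rmult Rplus. Proof. move=> x y z; ring. Qed.
Lemma Rmult_plus_distr_r_law : right_distributive Rmult Rplus. Proof. move=> x y z; ring. Qed.
HB.instance Definition _ :=
  Monoid.isComLaw.Build R 0 Rplus Rplus_assoc_law Rplus_comm_law Rplus_0_l_id.
HB.instance Definition _ :=
  Monoid.isComLaw.Build R 1 Rmult Rmult_assoc_law Rmult_comm_law Rmult_1_l_id.
HB.instance Definition _ := Monoid.isMulLaw.Build R 0 Rmult Rmult_0_l_zero Rmult_0_r_zero.
HB.instance Definition _ :=
  Monoid.isAddLaw.Build R Rmult Rplus Rmult_plus_distr_l_law Rmult_plus_distr_r_law.

Notation "\sumR_ ( i : t ) F" := (\big[Rplus/0]_(i : t) F)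
  (at level 41, F at level 41, i at level 50).
Notation "\sumR_ ( i | P ) F" := (\big[Rplus/0]_(i | P) F)
  (at level 41, F at level 41, i at level 50).
Notation "\sumR_ ( i : t | P ) F" := (\big[Rplus/0]_(i : t | P) F)
  (at level 41, F at level 41, i at level 50).
Notation "\prodR_ ( i : t ) F" := (\big[Rmult/1]_(i : t) F)
  (at level 36, F at level 36, i at level 50).

Lemma rsumE (T : finType) (f : T -> R) : rsum f = \sumR_(t : T) f t.
Proof. rewrite /rsum -big_enum /= unlock /reducebig; by elim: (enum T) => //= a l ->. Qed.

Lemma rprodE (T : finType) (f : T -> R) : rprod f = \prodR_(t : T) f t.
Proof. rewrite /rprod -big_enum /= unlock /reducebig; by elim: (enum T) => //= a l ->. Qed.

Lemma pmf_ge0 (T : finType) (f : T -> R) : is_pmf f -> forall t, 0 <= f t.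
Proof. by case. Qed.

Lemma pmf_sum1 (T : finType) (f : T -> R) : is_pmf f -> \sumR_(t : T) f t = 1.
Proof. by case=> _; rewrite rsumE. Qed.

Lemma pmf_inhabited (T : finType) (f : T -> R) : is_pmf f -> inhabited T.
Proof.
move=> hf; case: (pickP (fun _ : T => true)) => [t _ | none]; first exact: inhabits t.
by have := pmf_sum1 hf; rewrite big1 => [|t _]; [lra | have := none t].
Qed.

Section RealBigOps.
Variable T : finType.

Lemma sumR_le (P : pred T) (F G : T -> R) :
  (forall i, P i -> F i <= G i) -> \sumR_(i | P i) F i <= \sumR_(i | P i) G i.
Proof. move=> h; apply: (big_ind2 (fun x y => x <= y)) => //; [lra | move=> *; lra]. Qed.

Lemma sumR_ge0 (P : pred T) (F : T -> R) :
  (forall i, P i -> 0 <= F i) -> 0 <= \sumR_(i | P i) F i.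
Proof. move=> h; apply: (big_ind (fun x => 0 <= x)) => //; [lra | move=> *; lra]. Qed.

Lemma prodR_ge0 (F : T -> R) : (forall i, 0 <= F i) -> 0 <= \prodR_(i : T) F i.
Proof. move=> h; apply: (big_ind (fun x => 0 <= x)) => //; [lra | move=> *; nra]. Qed.

Lemma prodR_gt0 (F : T -> R) : (forall i, 0 < F i) -> 0 < \prodR_(i : T) F i.
Proof. move=> h; apply: (big_ind (fun x => 0 < x)) => //; [lra | move=> *; nra]. Qed.

Lemma prodR_le1 (F : T -> R) : (forall i, 0 <= F i <= 1) -> \prodR_(i : T) F i <= 1.
Proof.
move=> h; suff: 0 <= \prodR_(i : T) F i <= 1 by lra.
apply: (big_ind (fun x => 0 <= x <= 1)) => //; [lra | move=> *; nra].
Qed.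

Lemma prodR_pos_or_zero (F : T -> R) : (forall i, 0 <= F i) ->
  (forall i, 0 < F i) \/ \prodR_(i : T) F i = 0.
Proof.
move=> h; case: (classic (forall i, 0 < F i)) => [|hn]; [by left | right].
have [i hi] := not_all_ex_not _ _ hn.
have F0 : F i = 0 by have := h i; lra.
by rewrite (bigD1 i) //= F0; ring.
Qed.

Lemma sumR_delta (x : T) (G : T -> R) :
  \sumR_(c : T) (if c == x then G c else 0) = G x.
Proof. by rewrite (bigD1 x) //= eqxx big1 ?Rplus_0_r // => c /negbTE ->. Qed.

Lemma sumR_term_le (P : pred T) (F : T -> R) i : P i ->
  (forall j, P j -> 0 <= F j) -> F i <= \sumR_(j | P j) F j.
Proof.
move=> Pi h; rewrite (bigD1 i) //=.
have : 0 <= \sumR_(j | P j && (j != i)) F j by apply: sumR_ge0 => j /andP [Pj _]; exact: h.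
lra.
Qed.

Lemma sumR_const (c : R) : \sumR_(i : T) c = INR #|T| * c.
Proof.
rewrite big_const; elim: #|T| => [|k ih]; first (simpl; ring).
by rewrite iterS ih S_INR; ring.
Qed.

Lemma sumR_opp (F : T -> R) : \sumR_(t : T) - F t = - \sumR_(t : T) F t.
Proof. by rewrite (big_endo Ropp) //; [move=> x y; ring | ring]. Qed.

Lemma sumR_minus (F G : T -> R) :
  \sumR_(t : T) (F t - G t) = \sumR_(t : T) F t - \sumR_(t : T) G t.
Proof. by rewrite /Rminus big_split /= sumR_opp. Qed.

Lemma ln_prodR (F : T -> R) :
  (forall i, 0 < F i) -> ln (\prodR_(i : T) F i) = \sumR_(i : T) ln (F i).
Proof.
move=> h.
suff: 0 < \prodR_(i : T) F i /\ ln (\prodR_(i : T) F i) = \sumR_(i : T) ln (F i) by case.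
apply: (big_ind2 (fun x y => 0 < x /\ ln x = y)) => [|x1 x2 y1 y2 [h1 e1] [h2 e2]|i _].
- by split; [lra | exact: ln_1].
- by split; [nra | rewrite ln_mult // e1 e2].
- by split; [exact: h | done].
Qed.

Lemma sumR_le_pred (P P' : pred T) (F : T -> R) : (forall i, P i -> P' i) ->
  (forall i, 0 <= F i) -> \sumR_(i | P i) F i <= \sumR_(i | P' i) F i.
Proof.
move=> sub F0; rewrite [X in X <= _]big_mkcond [X in _ <= X]big_mkcond /=.
apply: sumR_le => i _; case: (boolP (P i)) => [/sub -> | _]; first lra.
by case: ifP => _; [exact: F0 | lra].
Qed.

End RealBigOps.

Lemma sumR_pair (A B : finType) (G : A * B -> R) :
  \sumR_(t : A * B) G t = \sumR_(a : A) \sumR_(b : B) G (a, b).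
Proof. by rewrite pair_bigA; apply: eq_bigr => [[a b]]. Qed.

Lemma sumR_snd_eq (A B : finType) (b : B) (F : A * B -> R) :
  \sumR_(a : A * B | a.2 == b) F a = \sumR_(a1 : A) F (a1, b).
Proof.
rewrite big_mkcond sumR_pair; apply: eq_bigr => a1 _ /=.
exact: (sumR_delta b (fun b' => F (a1, b'))).
Qed.

Lemma sumR_fst_eq (A B : finType) (a : A) (F : A * B -> R) :
  \sumR_(c : A * B | c.1 == a) F c = \sumR_(b : B) F (a, b).
Proof.
rewrite big_mkcond sumR_pair -(sumR_delta a (fun a' => \sumR_(b : B) F (a', b))).
by apply: eq_bigr => a' _ /=; case: (a' == a); last rewrite big1.
Qed.

Lemma Rdiv_ge0 x y : 0 <= x -> 0 <= y -> 0 <= x / y.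
Proof.
move=> hx hy; case: (Req_dec y 0) => [->|y0]; first by rewrite /Rdiv Rinv_0; lra.
by apply: Rmult_le_pos => //; apply: Rlt_le; apply: Rinv_0_lt_compat; lra.
Qed.

Definition ind (b : bool) : R := if b then 1 else 0.

Lemma ind_ge0 b : 0 <= ind b. Proof. case: b => /=; lra. Qed.

Definition EX (T : finType) (w f : T -> R) : R := \sumR_(t : T) w t * f t.

Section Expectation.
Variables (T : finType) (w : T -> R).

Lemma EX_ext (f g : T -> R) : (forall t, f t = g t) -> EX w f = EX w g.
Proof. by move=> h; apply: eq_bigr => t _; rewrite h. Qed.

Lemma EX_add (f g : T -> R) : EX w (fun t => f t + g t) = EX w f + EX w g.
Proof. by rewrite /EX -big_split; apply: eq_bigr => t _ /=; ring. Qed.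

Lemma EX_scal c (f : T -> R) : EX w (fun t => c * f t) = c * EX w f.
Proof. by rewrite /EX big_distrr; apply: eq_bigr => t _ /=; ring. Qed.

Lemma EX_sum (A : finType) (P : pred A) (f : A -> T -> R) :
  EX w (fun t => \sumR_(a | P a) f a t) = \sumR_(a | P a) EX w (f a).
Proof. by rewrite /EX; under eq_bigr do rewrite big_distrr; rewrite exchange_big. Qed.

Lemma EX_lin (A : finType) (P : pred A) (c : A -> R) (f : A -> T -> R) :
  EX w (fun t => \sumR_(a | P a) c a * f a t) = \sumR_(a | P a) c a * EX w (f a).
Proof. by rewrite EX_sum; apply: eq_bigr => a _; rewrite EX_scal. Qed.

Lemma EX_ind_eq (x : T) : EX w (fun t => ind (t == x)) = w x.
Proof.
rewrite /EX -(sumR_delta x w); apply: eq_bigr => t _.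
by rewrite /ind; case: (t == x); ring.
Qed.

Hypothesis w_ge0 : forall t, 0 <= w t.

Lemma EX_le (f g : T -> R) : (forall t, f t <= g t) -> EX w f <= EX w g.
Proof. move=> h; apply: sumR_le => t _; exact: Rmult_le_compat_l. Qed.

Lemma EX_ge0 (f : T -> R) : (forall t, 0 <= f t) -> 0 <= EX w f.
Proof. move=> h; apply: sumR_ge0 => t _; exact: Rmult_le_pos. Qed.

Hypothesis w_sum1 : \sumR_(t : T) w t = 1.

Lemma EX_const c : EX w (fun _ => c) = c.
Proof. by rewrite /EX -big_distrl /= w_sum1; ring. Qed.

Lemma EX_centered (f : T -> R) : EX w (fun t => f t - EX w f) = 0.
Proof.
rewrite /EX; under eq_bigr do rewrite Rmult_minus_distr_l.
by rewrite sumR_minus -big_distrl /= w_sum1 Rmult_1_l; rewrite /EX; ring.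
Qed.

Lemma EX_le_const (f : T -> R) c : (forall t, f t <= c) -> EX w f <= c.
Proof. move=> h; rewrite -[X in _ <= X](EX_const c); exact: EX_le. Qed.

Lemma EX_exists_lt (f : T -> R) eps : EX w f < eps -> exists t, f t < eps.
Proof.
move=> h; apply: NNPP => hn; suff: eps <= EX w f by lra.
apply: (Rle_trans _ _ _ (Req_le _ _ (esym (EX_const eps)))).
by apply: EX_le => t; apply: Rnot_lt_le => ht; apply: hn; exists t.
Qed.

End Expectation.

Lemma EX_swap (A B : finType) (wa : A -> R) (wb : B -> R) (f : A -> B -> R) :
  EX wa (fun a => EX wb (fun b => f a b)) = EX wb (fun b => EX wa (fun a => f a b)).
Proof.
rewrite /EX; under eq_bigr do rewrite big_distrr.
rewrite exchange_big; apply: eq_bigr => b _ /=.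
by rewrite big_distrr; apply: eq_bigr => a _ /=; ring.
Qed.

Lemma EX_pair (A B : finType) (wa : A -> R) (wb : B -> R) (f : A * B -> R) :
  EX (fun a => wa a.1 * wb a.2) f = EX wa (fun x => EX wb (fun z => f (x, z))).
Proof.
rewrite /EX sumR_pair; apply: eq_bigr => x _; rewrite big_distrr /=.
by apply: eq_bigr => z _; ring.
Qed.

Section ProductMeasure.
Variables (I T : finType) (mu : I -> T -> R).

Definition pw (g : {ffun I -> T}) : R := \prodR_(i : I) mu i (g i).

Lemma pw_ge0 : (forall i t, 0 <= mu i t) -> forall g, 0 <= pw g.
Proof. move=> h g; apply: prodR_ge0 => i; exact: h. Qed.

Lemma sum_ffun_prod (h : I -> T -> R) :
  \sumR_(g : {ffun I -> T}) \prodR_(i : I) h i (g i) = \prodR_(i : I) \sumR_(t : T) h i t.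
Proof. by rewrite bigA_distr_bigA. Qed.

Lemma EX_prod (h : I -> T -> R) :
  EX pw (fun g => \prodR_(i : I) h i (g i)) = \prodR_(i : I) EX (mu i) (h i).
Proof.
rewrite /EX /pw; under eq_bigr do rewrite -big_split /=.
exact: (sum_ffun_prod (fun i t => mu i t * h i t)).
Qed.

Lemma pw_pos_coord (g : {ffun I -> T}) : (forall i t, 0 <= mu i t) ->
  0 < pw g -> forall i, 0 < mu i (g i).
Proof.
move=> mu0 hg; have [|//|g0] := prodR_pos_or_zero (F := fun i => mu i (g i)).
  by move=> i; exact: mu0.
by rewrite /pw g0 in hg; lra.
Qed.

Hypothesis mu_sum1 : forall i, \sumR_(t : T) mu i t = 1.

Lemma pw_sum1 : \sumR_(g : {ffun I -> T}) pw g = 1.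
Proof.
have := EX_prod (fun _ _ => 1); rewrite /EX.
under eq_bigr do rewrite big1 // Rmult_1_r.
move=> ->; apply: big1 => i _; under eq_bigr do rewrite Rmult_1_r; exact: mu_sum1.
Qed.

Lemma EX_marg1 (i0 : I) (F : T -> R) : EX pw (fun g => F (g i0)) = EX (mu i0) F.
Proof.
pose H i c := if i == i0 then F c else 1.
transitivity (EX pw (fun g => \prodR_(i : I) H i (g i))).
  by apply: EX_ext => g; rewrite (bigD1 i0) //= /H eqxx big1 ?Rmult_1_r // => i /negbTE ->.
rewrite (EX_prod H) (bigD1 i0) //= /H eqxx big1 ?Rmult_1_r // => i /negbTE ->.
exact: EX_const (mu_sum1 i) 1.
Qed.

Lemma EX_marg2 (i0 i1 : I) (F : T -> T -> R) : i0 != i1 ->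
  EX pw (fun g => F (g i0) (g i1)) = EX (mu i0) (fun t => EX (mu i1) (fun t' => F t t')).
Proof.
move=> ne; have ne' : (i1 == i0) = false by apply/negbTE; rewrite eq_sym.
pose H (t t' : T) (i : I) (c : T) :=
  if i == i0 then ind (c == t) else if i == i1 then ind (c == t') else 1.
have prodH : forall t t' (g : {ffun I -> T}),
    \prodR_(i : I) H t t' i (g i) = ind (g i0 == t) * ind (g i1 == t').
  move=> t t' g; rewrite (bigD1 i0) //= (bigD1 i1) /=; last by rewrite eq_sym.
  rewrite /H eqxx ne' eqxx.
  by rewrite big1 ?Rmult_1_r // => i /andP [/negbTE -> /negbTE ->].
have EXH : forall t t', EX pw (fun g => \prodR_(i : I) H t t' i (g i)) = mu i0 t * mu i1 t'.
  move=> t t'; rewrite (EX_prod (H t t')) (bigD1 i0) //= (bigD1 i1) /=; last by rewrite eq_sym.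
  rewrite /H eqxx ne' eqxx.
  rewrite big1 => [|i /andP [/negbTE -> /negbTE ->]]; last first.
    exact: EX_const (mu_sum1 i) 1.
  by rewrite !EX_ind_eq; ring.
transitivity (EX pw (fun g => \sumR_(t : T) \sumR_(t' : T)
                 F t t' * \prodR_(i : I) H t t' i (g i))).
  apply: EX_ext => g; under eq_bigr do under eq_bigr do rewrite prodH.
  rewrite -[LHS](sumR_delta (g i0) (fun t => F t (g i1))); apply: eq_bigr => t _.
  rewrite -(sumR_delta (g i1) (fun t' => if t == g i0 then F t t' else 0)).
  apply: eq_bigr => t' _; rewrite /ind [g i0 == t]eq_sym [g i1 == t']eq_sym.
  by case: (t == g i0); case: (t' == g i1); ring.
rewrite EX_sum; apply: eq_bigr => t _; rewrite EX_sum big_distrr; apply: eq_bigr => t' _ /=.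
by rewrite EX_scal EXH; ring.
Qed.

End ProductMeasure.

Lemma pw_pmf (I T : finType) (mu : I -> T -> R) : (forall i, is_pmf (mu i)) -> is_pmf (pw mu).
Proof.
move=> h; split; first by apply: pw_ge0 => i; exact: pmf_ge0.
by rewrite rsumE; apply: pw_sum1 => i; exact: pmf_sum1.
Qed.

Lemma EX_le1 (T : finType) (w f : T -> R) : is_pmf w -> (forall t, f t <= 1) -> EX w f <= 1.
Proof. by move=> hw; apply: EX_le_const; [exact: pmf_ge0 | exact: pmf_sum1]. Qed.

Lemma sum_zip (I A B : finType) (F : {ffun I -> A} -> {ffun I -> B} -> R) :
  \sumR_(a : {ffun I -> A}) \sumR_(b : {ffun I -> B}) F a b =
  \sumR_(z : {ffun I -> A * B}) F [ffun i => (z i).1] [ffun i => (z i).2].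
Proof.
rewrite pair_bigA /=.
rewrite (reindex (fun z : {ffun I -> A * B} => ([ffun i => (z i).1], [ffun i => (z i).2]))) //=.
apply: onW_bij; exists (fun ab : {ffun I -> A} * {ffun I -> B} => [ffun i => (ab.1 i, ab.2 i)]).
  by move=> z; apply/ffunP => i; rewrite !ffunE; case: (z i).
by case=> a b /=; congr (_, _); apply/ffunP => i; rewrite !ffunE.
Qed.

Lemma EX_le_supp (T : finType) (w f g : T -> R) : (forall t, 0 <= w t) ->
  (forall t, 0 < w t -> f t <= g t) -> EX w f <= EX w g.
Proof.
move=> w0 h; apply: sumR_le => t _.
case: (Rle_lt_or_eq_dec _ _ (w0 t)) => [wt|<-]; last lra.
exact: Rmult_le_compat_l (w0 t) (h t wt).
Qed.

Lemma iid_sum_second_moment (I T : finType) (p f : T -> R) :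
  \sumR_(t : T) p t = 1 -> EX p f = 0 ->
  EX (pw (fun _ : I => p)) (fun u => (\sumR_(i : I) f (u i)) * (\sumR_(i : I) f (u i)))
  = INR #|I| * EX p (fun t => f t * f t).
Proof.
move=> p1 mean0; have mu1 : forall i : I, \sumR_(t : T) p t = 1 by [].
transitivity (\sumR_(i : I) \sumR_(j : I) EX (pw (fun _ : I => p)) (fun u => f (u i) * f (u j))).
  rewrite -(EX_ext _
    (f := fun u : {ffun I -> T} => \sumR_(i : I) \sumR_(j : I) f (u i) * f (u j))); last first.
    by move=> u; rewrite big_distrl /=; apply: eq_bigr => i _; rewrite big_distrr.
  by rewrite EX_sum; under eq_bigr do rewrite EX_sum.
rewrite -sumR_const; apply: eq_bigr => i _.
rewrite (bigD1 i) //= (EX_marg1 mu1 i (fun t => f t * f t)).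
rewrite big1 ?Rplus_0_r // => j ji.
rewrite (EX_marg2 mu1 (fun t t' => f t * f t')) 1?eq_sym //.
by under EX_ext do rewrite EX_scal mean0 Rmult_0_r; rewrite /EX big1 // => t _; ring.
Qed.

(* Deterministic core of Chebyshev's inequality for a sum of two parts
   falling below its mean: the squared deviations dominate the squared gap. *)
Lemma below_mean_deviation (a b ma mb g : R) : a + b <= g -> g < ma + mb ->
  1 <= (2 * ((a - ma) * (a - ma)) + 2 * ((b - mb) * (b - mb))) /
       ((ma + mb - g) * (ma + mb - g)).
Proof.
move=> hab hg; set D := ma + mb - g.
have D0 : 0 < D by rewrite /D; lra.
have hsq : D * D <= ((a - ma) + (b - mb)) * ((a - ma) + (b - mb)) by rewrite /D; nra.
have h2 := Rle_0_sqr ((a - ma) - (b - mb)); rewrite /Rsqr in h2.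
apply: (Rmult_le_reg_r (D * D)); first nra.
by rewrite Rmult_1_l /Rdiv Rmult_assoc Rinv_l; nra.
Qed.

Definition Rltb (x y : R) : bool := if Rlt_dec x y then true else false.

Lemma ind_markov g X : 0 <= X -> ind (Rltb (exp g) X) <= X * exp (- g).
Proof.
move=> hX; rewrite /ind /Rltb; case: Rlt_dec => h; last first.
  by apply: Rmult_le_pos => //; apply: Rlt_le; exact: exp_pos.
rewrite exp_Ropp; have := exp_pos g => hg.
by apply: (Rmult_le_reg_r (exp g)) => //; rewrite Rmult_assoc Rinv_l; lra.
Qed.

Definition lmean (T : finType) (w f : T -> R) : R := EX w (fun t => ln (f t)).
Definition lvar (T : finType) (w f : T -> R) : R :=
  EX w (fun t => (ln (f t) - lmean w f) * (ln (f t) - lmean w f)).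

Lemma lvar_ge0 (T : finType) (w f : T -> R) : (forall t, 0 <= w t) -> 0 <= lvar w f.
Proof. by move=> w0; apply: EX_ge0 => // t; exact: Rle_0_sqr. Qed.

Definition ldev (I T : finType) (w f : T -> R) (u : {ffun I -> T}) : R :=
  \sumR_(i : I) (ln (f (u i)) - lmean w f).

Lemma ldevE (I T : finType) (w f : T -> R) (u : {ffun I -> T}) :
  ldev w f u = \sumR_(i : I) ln (f (u i)) - INR #|I| * lmean w f.
Proof. by rewrite /ldev sumR_minus sumR_const. Qed.

Lemma ldev_second_moment (I T : finType) (w f : T -> R) : \sumR_(t : T) w t = 1 ->
  EX (pw (fun _ : I => w)) (fun u => ldev w f u * ldev w f u) = INR #|I| * lvar w f.
Proof.
move=> w1; rewrite /ldev (iid_sum_second_moment (f := fun t => ln (f t) - lmean w f) _ w1) //.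
exact: EX_centered.
Qed.

Section Tail.
Variables (T L : finType) (p : T -> R) (P : L -> R) (rr : T -> R) (kk : L -> R).
Hypotheses (p_ge0 : forall t, 0 <= p t) (p_sum1 : \sumR_(t : T) p t = 1).
Hypotheses (P_ge0 : forall t, 0 <= P t) (P_sum1 : \sumR_(t : L) P t = 1).
Hypotheses (rr_pos : forall t, 0 < p t -> 0 < rr t) (kk_pos : forall t, 0 < P t -> 0 < kk t).

Lemma tail_bound (m n : nat) g :
  let M := INR m * lmean p rr + INR n * lmean P kk in
  g < M ->
  EX (pw (fun _ : 'I_m => p)) (fun u => EX (pw (fun _ : 'I_n => P)) (fun l =>
     ind (~~ Rltb (exp g) ((\prodR_(i : 'I_m) rr (u i)) * \prodR_(j : 'I_n) kk (l j)))))
  <= 2 * (INR m * lvar p rr + INR n * lvar P kk) / ((M - g) * (M - g)).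
Proof.
move=> M gM; set D2 := (M - g) * (M - g).
have D2_pos : 0 < D2 by rewrite /D2; nra.
have pu0 := pw_ge0 (fun (_ : 'I_m) t => p_ge0 t).
have pl0 := pw_ge0 (fun (_ : 'I_n) t => P_ge0 t).
apply: (Rle_trans _ (EX (pw (fun _ : 'I_m => p)) (fun u => EX (pw (fun _ : 'I_n => P)) (fun l =>
  (2 * (ldev p rr u * ldev p rr u) + 2 * (ldev P kk l * ldev P kk l)) / D2)))).
  apply: EX_le_supp => // u /(pw_pos_coord (fun _ => p_ge0)) hu.
  apply: EX_le_supp => // l /(pw_pos_coord (fun _ => P_ge0)) hl.
  rewrite /ind /Rltb; case: Rlt_dec => [_ | low] /=.
    by apply: Rmult_le_pos; [nra | apply: Rlt_le; exact: Rinv_0_lt_compat].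
  have rr_prod := prodR_gt0 (fun i => rr_pos (hu i)).
  have kk_prod := prodR_gt0 (fun j => kk_pos (hl j)).
  have : ln ((\prodR_(i : 'I_m) rr (u i)) * \prodR_(j : 'I_n) kk (l j)) <= g.
    apply: Rnot_lt_le => hc; apply: low.
    by rewrite -[X in _ < X]exp_ln; [exact: exp_increasing | exact: Rmult_lt_0_compat].
  rewrite ln_mult // !ln_prodR => [sum_le|j|i]; [|exact: kk_pos|exact: rr_pos].
  rewrite (ldevE p rr) (ldevE P kk) !card_ord /D2 /M.
  exact: below_mean_deviation sum_le gM.
apply: Req_le.
have pu1 := pw_sum1 (fun (_ : 'I_m) => p_sum1).
have pl1 := pw_sum1 (fun (_ : 'I_n) => P_sum1).
transitivity (EX (pw (fun _ : 'I_m => p)) (fun u => 2 / D2 * (ldev p rr u * ldev p rr u)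
            + EX (pw (fun _ : 'I_n => P)) (fun l => 2 / D2 * (ldev P kk l * ldev P kk l)))).
  apply: EX_ext => u; rewrite -(EX_const pl1 (2 / D2 * (ldev p rr u * ldev p rr u))) -EX_add.
  by apply: EX_ext => l; rewrite /Rdiv; ring.
rewrite EX_add EX_const // !EX_scal (ldev_second_moment _ _ p_sum1).
by rewrite (ldev_second_moment _ _ P_sum1) !card_ord /Rdiv; ring.
Qed.
End Tail.

Section Conditional.
Variables (T : finType) (p : T -> R).
Hypothesis p_ge0 : forall t, 0 <= p t.

Lemma margE (U : finType) (g : T -> U) u :
  marg p g u = \sumR_(t : T) (if g t == u then p t else 0).
Proof. by rewrite /marg rsumE. Qed.

Lemma marg_ge0 (U : finType) (g : T -> U) u : 0 <= marg p g u.
Proof. rewrite margE; apply: sumR_ge0 => t _; case: eqP => _; [exact: p_ge0 | lra]. Qed.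

Lemma marg_ge (U : finType) (g : T -> U) t : p t <= marg p g (g t).
Proof.
rewrite margE (bigD1 t) //= eqxx.
have : 0 <= \sumR_(s | s != t) (if g s == g t then p s else 0).
  by apply: sumR_ge0 => s _; case: eqP => _; [exact: p_ge0 | lra].
lra.
Qed.

Lemma marg_sum_fst (A C : finType) (fA : T -> A) (fC : T -> C) c :
  \sumR_(a : A) marg p (fun t => (fA t, fC t)) (a, c) = marg p fC c.
Proof.
under eq_bigr do rewrite margE.
rewrite exchange_big margE; apply: eq_bigr => t _ /=.
rewrite -(sumR_delta (fA t) (fun _ => if fC t == c then p t else 0)).
by apply: eq_bigr => a _; rewrite xpair_eqE [a == _]eq_sym; case: (fA t == a).
Qed.

Lemma marg_sum_mid (Y A C : finType) (fY : T -> Y) (fA : T -> A) (fC : T -> C) y c :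
  \sumR_(a : A) marg p (fun t => (fY t, (fA t, fC t))) (y, (a, c)) =
  marg p (fun t => (fY t, fC t)) (y, c).
Proof.
under eq_bigr do rewrite margE.
rewrite exchange_big margE; apply: eq_bigr => t _ /=.
rewrite -(sumR_delta (fA t) (fun _ => if (fY t, fC t) == (y, c) then p t else 0)).
apply: eq_bigr => a _; rewrite !xpair_eqE [a == _]eq_sym.
by case: (fA t == a); rewrite ?andbF ?andbT.
Qed.

(* P(A = a | B = b); zero when P(B = b) = 0. *)
Definition cprob (A B : finType) (fA : T -> A) (fB : T -> B) (a : A) (b : B) : R :=
  marg p (fun t => (fA t, fB t)) (a, b) / marg p fB b.

Lemma cprob_ge0 (A B : finType) (fA : T -> A) (fB : T -> B) a b : 0 <= cprob fA fB a b.
Proof.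
by apply: Rdiv_ge0; exact: marg_ge0.
Qed.

Lemma cprob_gt0 (A B : finType) (fA : T -> A) (fB : T -> B) t :
  0 < p t -> 0 < cprob fA fB (fA t) (fB t).
Proof.
move=> h; have h1 := marg_ge (fun t => (fA t, fB t)) t; have h2 := marg_ge fB t.
by apply: Rmult_lt_0_compat; [lra | apply: Rinv_0_lt_compat; lra].
Qed.

Lemma cprob_sum_le1 (A B : finType) (fA : T -> A) (fB : T -> B) b :
  \sumR_(a : A) cprob fA fB a b <= 1.
Proof.
rewrite /cprob /Rdiv -big_distrl /= marg_sum_fst.
case: (Req_dec (marg p fB b) 0) => [->|h]; first by rewrite Rinv_0; lra.
by rewrite Rinv_r //; lra.
Qed.

Lemma lmean_cprob (A B : finType) (fA : T -> A) (fB : T -> B) :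
  lmean p (fun t => cprob fA fB (fA t) (fB t)) = - cond_entropy p fA fB.
Proof. by rewrite /lmean /EX /cond_entropy rsumE Ropp_involutive. Qed.

Definition lratio (TA TB TY : finType) (fA : T -> TA) (fB : T -> TB) (fY : T -> TY)
    (a : TA) (b : TB) (y : TY) : R :=
  cprob fY (fun t => (fA t, fB t)) y (a, b) / cprob fY fB y b.

Section LikelihoodRatio.
Variables (TA TB TY : finType) (fA : T -> TA) (fB : T -> TB) (fY : T -> TY).

Lemma lratio_ge0 a b y : 0 <= lratio fA fB fY a b y.
Proof.
by apply: Rdiv_ge0; exact: cprob_ge0.
Qed.

Lemma lratio_gt0 t : 0 < p t -> 0 < lratio fA fB fY (fA t) (fB t) (fY t).
Proof.
move=> h; apply: Rmult_lt_0_compat; first exact: (cprob_gt0 fY (fun t => (fA t, fB t)) h).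
by apply: Rinv_0_lt_compat; exact: (cprob_gt0 fY fB h).
Qed.

Lemma lmean_lratio :
  lmean p (fun t => lratio fA fB fY (fA t) (fB t) (fY t)) = cond_mutinf p fA fY fB.
Proof.
rewrite /lmean /EX /cond_mutinf /cond_entropy !rsumE.
transitivity (\sumR_(t : T) (p t * ln (cprob fY (fun t => (fA t, fB t)) (fY t) (fA t, fB t))
                             - p t * ln (cprob fY fB (fY t) (fB t)))).
  apply: eq_bigr => t _; case: (Rle_lt_or_eq_dec _ _ (p_ge0 t)) => [h|<-]; last ring.
  have num := cprob_gt0 fY (fun t => (fA t, fB t)) h; have den := cprob_gt0 fY fB h.
  rewrite /lratio /Rdiv ln_mult ?ln_Rinv //; [ring | exact: Rinv_0_lt_compat].
by rewrite sumR_minus /cprob; ring.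
Qed.

Lemma lratio_mean_le1 (mu : TA -> R) b y : (forall a, 0 <= mu a) ->
  (forall a, marg p (fun t => (fA t, fB t)) (a, b) = mu a * marg p fB b) ->
  EX mu (fun a => lratio fA fB fY a b y) <= 1.
Proof.
move=> mu0 indep; rewrite /EX /lratio /cprob.
have hD := marg_ge0 (fun t => (fY t, fB t)) (y, b).
have hB := marg_ge0 fB b.
set D := marg p (fun t => (fY t, fB t)) (y, b) in hD *.
set B := marg p fB b in hB indep *.
case: (Req_dec D 0) => [D0|Dn0].
  by rewrite big1; [lra | move=> a _; rewrite D0 /Rdiv Rmult_0_l Rinv_0; ring].
case: (Req_dec B 0) => [B0|Bn0].
  by rewrite big1; [lra | move=> a _; rewrite B0 /Rdiv Rinv_0 Rmult_0_r Rinv_0; ring].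
apply: (Rle_trans _ (\sumR_(a : TA) marg p (fun t => (fY t, (fA t, fB t))) (y, (a, b)) / D)).
  apply: sumR_le => a _; rewrite indep.
  case: (Req_dec (mu a) 0) => [->|mn0].
    rewrite Rmult_0_l; apply: Rmult_le_pos; first exact: marg_ge0.
    by apply: Rlt_le; apply: Rinv_0_lt_compat; lra.
  by set N := marg _ _ _; apply: Req_le; field.
by rewrite /Rdiv -big_distrl /= (marg_sum_mid fY fA fB) -/D Rinv_r //; lra.
Qed.

End LikelihoodRatio.
End Conditional.

Section JointLaw.
Variables (Q X1 X2 Y1 Y2 : finType).
Variables (pq : Q -> R) (px1 : Q -> X1 -> R) (px2 : Q -> X2 -> R).
Variable W : X1 -> X2 -> (Y1 * Y2)%type -> R.
Hypotheses (Hpq : is_pmf pq) (Hpx1 : forall q, is_pmf (px1 q))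
  (Hpx2 : forall q, is_pmf (px2 q)) (HW : forall x1 x2, is_pmf (W x1 x2)).
Local Notation P := (in_joint pq px1 px2 W).
Local Notation input_law s := (pq s.1.1 * px1 s.1.1 s.1.2 * px2 s.1.1 s.2).

Lemma in_joint_ge0 t : 0 <= P t.
Proof. by case: t => [[[q x1] x2] y] /=; repeat apply: Rmult_le_pos; apply: pmf_ge0. Qed.

Lemma marg_in_joint_inputs (U : finType) (h : Q * X1 * X2 -> U) v :
  marg P (fun t => h t.1) v =
  \sumR_(s : Q * X1 * X2) (if h s == v then input_law s else 0).
Proof.
rewrite margE sumR_pair; apply: eq_bigr => -[[q x1] x2] _ /=.
case: (h _ == v); last by rewrite big1.
by rewrite -big_distrr /= (pmf_sum1 (HW x1 x2)); ring.
Qed.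

Lemma in_joint_sum1 : \sumR_(t : Q * X1 * X2 * (Y1 * Y2)) P t = 1.
Proof.
have := marg_in_joint_inputs (fun _ => tt) tt; rewrite margE /= => ->.
rewrite !sumR_pair /= -[RHS](pmf_sum1 Hpq); apply: eq_bigr => q _.
rewrite -[RHS]Rmult_1_r -(pmf_sum1 (Hpx1 q)) big_distrr /=; apply: eq_bigr => x1 _.
rewrite -[RHS]Rmult_1_r -(pmf_sum1 (Hpx2 q)) big_distrr /=; apply: eq_bigr => x2 _; ring.
Qed.

Lemma in_joint_pmf : is_pmf P.
Proof. by split; [exact: in_joint_ge0 | rewrite rsumE; exact: in_joint_sum1]. Qed.

Lemma marg_in_joint_inj (U : finType) (h : Q * X1 * X2 -> U) s :
  injective h -> marg P (fun t => h t.1) (h s) = input_law s.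
Proof.
by move=> inj_h; rewrite marg_in_joint_inputs; under eq_bigr do rewrite (inj_eq inj_h);
  rewrite sumR_delta.
Qed.

Local Notation T := (Q * X1 * X2 * (Y1 * Y2))%type.

Let x1_x2q_inj : injective (fun s : Q * X1 * X2 => (s.1.2, (s.2, s.1.1))).
Proof. by move=> [[? ?] ?] [[? ?] ?] [-> -> ->]. Qed.
Let x2_x1q_inj : injective (fun s : Q * X1 * X2 => (s.2, (s.1.2, s.1.1))).
Proof. by move=> [[? ?] ?] [[? ?] ?] [-> -> ->]. Qed.
Let x12_q_inj : injective (fun s : Q * X1 * X2 => ((s.1.2, s.2), s.1.1)).
Proof. by move=> [[? ?] ?] [[? ?] ?] [-> -> ->]. Qed.

Lemma marg_x2q q x2 : marg P (fun t : T => (t.1.2, t.1.1.1)) (x2, q) = pq q * px2 q x2.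
Proof.
rewrite -(marg_sum_fst _ (fun t : T => t.1.1.2)).
under eq_bigr => a _ do rewrite (marg_in_joint_inj (q, a, x2) x1_x2q_inj) /=.
by rewrite -big_distrl -big_distrr /= (pmf_sum1 (Hpx1 q)); ring.
Qed.

Lemma marg_x1q q x1 : marg P (fun t : T => (t.1.1.2, t.1.1.1)) (x1, q) = pq q * px1 q x1.
Proof.
rewrite -(marg_sum_fst _ (fun t : T => t.1.2)).
under eq_bigr => a _ do rewrite (marg_in_joint_inj (q, x1, a) x2_x1q_inj) /=.
by rewrite -big_distrr /= (pmf_sum1 (Hpx2 q)); ring.
Qed.

Lemma marg_q q : marg P (fun t : T => t.1.1.1) q = pq q.
Proof.
rewrite -(marg_sum_fst _ (fun t : T => (t.1.1.2, t.1.2))) sumR_pair.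
under eq_bigr => a _ do under eq_bigr => c _ do rewrite (marg_in_joint_inj (q, a, c) x12_q_inj) /=.
under eq_bigr => a _ do rewrite -big_distrr /= (pmf_sum1 (Hpx2 q)) Rmult_1_r.
by rewrite -big_distrr /= (pmf_sum1 (Hpx1 q)); ring.
Qed.

Lemma x1_indep q x1 x2 :
  marg P (fun t : T => (t.1.1.2, (t.1.2, t.1.1.1))) (x1, (x2, q)) =
  px1 q x1 * marg P (fun t : T => (t.1.2, t.1.1.1)) (x2, q).
Proof.
by rewrite (marg_in_joint_inj (q, x1, x2) x1_x2q_inj) marg_x2q /=; ring.
Qed.

Lemma x2_indep q x1 x2 :
  marg P (fun t : T => (t.1.2, (t.1.1.2, t.1.1.1))) (x2, (x1, q)) =
  px2 q x2 * marg P (fun t : T => (t.1.1.2, t.1.1.1)) (x1, q).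
Proof.
by rewrite (marg_in_joint_inj (q, x1, x2) x2_x1q_inj) marg_x1q /=; ring.
Qed.

Lemma x12_indep q x1 x2 :
  marg P (fun t : T => ((t.1.1.2, t.1.2), t.1.1.1)) ((x1, x2), q) =
  px1 q x1 * px2 q x2 * marg P (fun t : T => t.1.1.1) q.
Proof.
by rewrite (marg_in_joint_inj (q, x1, x2) x12_q_inj) marg_q /=; ring.
Qed.

End JointLaw.

Lemma EX_block_joint (I Q X1 X2 Y1 Y2 : finType) (pq : Q -> R) (px1 : Q -> X1 -> R)
    (px2 : Q -> X2 -> R) (W : X1 -> X2 -> (Y1 * Y2)%type -> R)
    (G : {ffun I -> Q} -> {ffun I -> X1} -> {ffun I -> X2} -> {ffun I -> Y1 * Y2} -> R) :
  EX (pw (fun _ : I => pq)) (fun q => EX (pw (fun j => px1 (q j))) (fun x1 =>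
    EX (pw (fun j => px2 (q j))) (fun x2 => EX (pw (fun j => W (x1 j) (x2 j))) (fun y =>
      G q x1 x2 y))))
  = EX (pw (fun _ : I => in_joint pq px1 px2 W))
      (fun l => G [ffun j => (l j).1.1.1] [ffun j => (l j).1.1.2] [ffun j => (l j).1.2]
                  [ffun j => (l j).2]).
Proof.
transitivity (\sumR_(q : {ffun I -> Q}) \sumR_(x1 : {ffun I -> X1})
  \sumR_(x2 : {ffun I -> X2}) \sumR_(y : {ffun I -> Y1 * Y2})
  (pw (fun _ : I => pq) q * pw (fun j => px1 (q j)) x1 * pw (fun j => px2 (q j)) x2 *
   pw (fun j => W (x1 j) (x2 j)) y) * G q x1 x2 y).
  rewrite /EX; apply: eq_bigr => q _; rewrite big_distrr /=; apply: eq_bigr => x1 _.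
  rewrite -Rmult_assoc big_distrr /=; apply: eq_bigr => x2 _.
  by rewrite -Rmult_assoc big_distrr /=; apply: eq_bigr => y _; ring.
rewrite !sum_zip /EX; apply: eq_bigr => l _.
congr (_ * _); last by congr G; apply/ffunP => j; rewrite !ffunE.
rewrite /pw -!big_split /=; apply: eq_bigr => j _; rewrite !ffunE.
by case: (l j) => [[[q x1] x2] y].
Qed.

Section ThresholdDecoder.
Variables (A1 A2 : finType) (test1 test2 test3 : A1 * A2 -> bool) (default : A1 * A2).

Definition threshold_decoder : A1 * A2 :=
  odflt default [pick a | [&& test1 a, test2 a & test3 a]].

Lemma threshold_decoder_error s :
  ind (threshold_decoder != s) <=
  ind (~~ test1 s) + ind (~~ test2 s) + ind (~~ test3 s)
  + \sumR_(a : A1 * A2 | (a.1 != s.1) && (a.2 == s.2)) ind (test1 a)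
  + \sumR_(a : A1 * A2 | (a.1 == s.1) && (a.2 != s.2)) ind (test2 a)
  + \sumR_(a : A1 * A2 | (a.1 != s.1) && (a.2 != s.2)) ind (test3 a).
Proof.
have one_term : forall (P : pred (A1 * A2)) (test : A1 * A2 -> bool) a, P a -> test a ->
    1 <= \sumR_(b | P b) ind (test b).
  move=> P test a Pa ta; have := sumR_term_le (F := fun b => ind (test b)) Pa.
  by rewrite /ind ta; apply=> b _; exact: ind_ge0.
set E1 := \big[_/_]_(_ | _) ind (test1 _).
set E2 := \big[_/_]_(_ | _) ind (test2 _).
set E3 := \big[_/_]_(_ | _) ind (test3 _).
have E1_ge0 : 0 <= E1 by apply: sumR_ge0 => a _; exact: ind_ge0.
have E2_ge0 : 0 <= E2 by apply: sumR_ge0 => a _; exact: ind_ge0.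
have E3_ge0 : 0 <= E3 by apply: sumR_ge0 => a _; exact: ind_ge0.
have I1 := ind_ge0 (~~ test1 s); have I2 := ind_ge0 (~~ test2 s); have I3 := ind_ge0 (~~ test3 s).
rewrite /threshold_decoder; case: pickP => [a /and3P [t1 t2 t3] | none] /=; last first.
  have fail : 1 <= ind (~~ test1 s) + ind (~~ test2 s) + ind (~~ test3 s).
    have := none s; rewrite /ind.
    by case: (test1 s); case: (test2 s); case: (test3 s) => //= _; lra.
  have dflt : ind (default != s) <= 1 by rewrite /ind; case: ifP => _; lra.
  lra.
case: (boolP (a == s)) => [_ | ne]; first by have -> : ind (~~ true) = 0 by []; lra.
have -> : ind (~~ false) = 1 by [].
have [e1 | ne1] := boolP (a.1 == s.1); have [e2 | ne2] := boolP (a.2 == s.2).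
- by rewrite [a]surjective_pairing [s]surjective_pairing xpair_eqE e1 e2 in ne.
- have : 1 <= E2 by exact: (one_term _ _ a (introT andP (conj e1 ne2)) t2).
  lra.
- have : 1 <= E1 by exact: (one_term _ _ a (introT andP (conj ne1 e2)) t1).
  lra.
- have : 1 <= E3 by exact: (one_term _ _ a (introT andP (conj ne1 ne2)) t3).
  lra.
Qed.

End ThresholdDecoder.

Lemma cheb_linear_regime (mm nn b th ez ev vz vv ga : R) :
  0 < mm -> nn = b * mm -> 0 < b -> 0 <= vz -> 0 <= vv -> 0 < th ->
  2 * th <= b * ev + ez -> ga = mm * th ->
  ga < mm * ez + nn * ev /\
  2 * (mm * vz + nn * vv) / ((mm * ez + nn * ev - ga) * (mm * ez + nn * ev - ga))
    <= 2 * (vz + b * vv) / (th * th) / mm.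
Proof.
move=> hm hn hb hvz hvv hth hgap hga; subst nn ga.
have hD : mm * th <= mm * ez + b * mm * ev - mm * th.
  have : mm * (2 * th) <= mm * (b * ev + ez) by apply: Rmult_le_compat_l; lra.
  nra.
have hmt : 0 < mm * th by nra.
split; first lra.
have hnum : 0 <= 2 * (mm * vz + b * mm * vv).
  have := Rmult_le_pos _ _ (Rlt_le _ _ hm) hvz.
  have := Rmult_le_pos _ _ (Rlt_le _ _ (Rmult_lt_0_compat _ _ hb hm)) hvv.
  lra.
apply: (Rle_trans _ (2 * (mm * vz + b * mm * vv) / ((mm * th) * (mm * th)))).
  rewrite /Rdiv; apply: Rmult_le_compat_l => //.
  by apply: Rinv_le_contravar; [nra | apply: Rmult_le_compat; lra].
by apply: Req_le; field; lra.
Qed.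

(* The false-acceptance bound exp(-m th) is also O(1/m). *)
Lemma exp_neg_le_inv x : 0 < x -> exp (- x) <= / x.
Proof.
move=> hx; rewrite exp_Ropp; have := exp_ineq1 x (Rgt_not_eq _ _ hx).
by move=> h; apply: Rinv_le_contravar; lra.
Qed.

Lemma common_margin6 (x1 x2 x3 x4 x5 x6 : R) :
  0 < x1 -> 0 < x2 -> 0 < x3 -> 0 < x4 -> 0 < x5 -> 0 < x6 ->
  exists th, 0 < th /\ (2 * th <= x1 /\ 2 * th <= x2 /\ 2 * th <= x3)
                    /\ (2 * th <= x4 /\ 2 * th <= x5 /\ 2 * th <= x6).
Proof.
move=> h1 h2 h3 h4 h5 h6.
have [a [a_pos [a1 [a2 a3]]]] : exists a, 0 < a /\ a <= x1 /\ a <= x2 /\ a <= x3.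
  exists (Rmin x1 (Rmin x2 x3)); split; first by repeat apply: Rmin_pos.
  have := Rmin_l x2 x3; have := Rmin_r x2 x3.
  have := Rmin_l x1 (Rmin x2 x3); have := Rmin_r x1 (Rmin x2 x3); move=> *; lra.
have [c [c_pos [c4 [c5 c6]]]] : exists c, 0 < c /\ c <= x4 /\ c <= x5 /\ c <= x6.
  exists (Rmin x4 (Rmin x5 x6)); split; first by repeat apply: Rmin_pos.
  have := Rmin_l x5 x6; have := Rmin_r x5 x6.
  have := Rmin_l x4 (Rmin x5 x6); have := Rmin_r x4 (Rmin x5 x6); move=> *; lra.
exists (Rmin a c / 2); have := Rmin_l a c; have := Rmin_r a c; have := Rmin_pos a c a_pos c_pos.
by move=> *; repeat split; lra.
Qed.

Lemma long_blocks (m0 n0 : nat) (b K eps : R) : (0 < m0)%nat -> INR n0 / INR m0 = b ->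
  0 < eps -> exists k : nat,
  INR (k.+1 * n0) = b * INR (k.+1 * m0) /\ K / INR (k.+1 * m0) < eps.
Proof.
move=> m0_pos rate eps_pos; have [k hk] := INR_unbounded (K / eps).
have m0R : 1 <= INR m0 by apply: (le_INR 1); apply/leP.
have kR := pos_INR k.
exists k; rewrite !mult_INR -rate; split; first by field; lra.
have M_ge : INR k + 1 <= INR k.+1 * INR m0 by rewrite S_INR; nra.
apply: (Rmult_lt_reg_r (INR k.+1 * INR m0)); first lra.
rewrite /Rdiv Rmult_assoc Rinv_l ?Rmult_1_r; last lra.
have K_eq : K = K / eps * eps by field; lra.
nra.
Qed.

Section RandomCode.
Variables (S1 S2 W1 W2 X1 X2 Y1 Y2 Q : finType).
Variables (p : src S1 S2 W1 W2 -> R) (W : X1 -> X2 -> (Y1 * Y2)%type -> R)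
  (pq : Q -> R) (px1 : Q -> X1 -> R) (px2 : Q -> X2 -> R).
Hypotheses (Hp : is_pmf p) (HW : forall x1 x2, is_pmf (W x1 x2)) (Hpq : is_pmf pq)
  (Hpx1 : forall q, is_pmf (px1 q)) (Hpx2 : forall q, is_pmf (px2 q)).
Variables (m n : nat).

Local Notation U := (src S1 S2 W1 W2).
Local Notation Um := {ffun 'I_m -> U}.
Local Notation Sm1 := {ffun 'I_m -> S1}.
Local Notation Sm2 := {ffun 'I_m -> S2}.
Local Notation Xn1 := {ffun 'I_n -> X1}.
Local Notation Xn2 := {ffun 'I_n -> X2}.
Local Notation Qn := {ffun 'I_n -> Q}.
Local Notation Yn := {ffun 'I_n -> (Y1 * Y2)%type}.
Local Notation CB1 := {ffun Sm1 -> Xn1}.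
Local Notation CB2 := {ffun Sm2 -> Xn2}.

Definition s1of (u : Um) : Sm1 := [ffun i => (u i).1.1.1].
Definition s2of (u : Um) : Sm2 := [ffun i => (u i).1.1.2].

Local Notation pu := (pw (fun _ : 'I_m => p)).
Local Notation wq := (pw (fun _ : 'I_n => pq)).
Local Notation mu1 q := (pw (fun j : 'I_n => px1 (q j))).
Local Notation mu2 q := (pw (fun j : 'I_n => px2 (q j))).
Local Notation w1 q := (pw (fun _ : Sm1 => mu1 q)).
Local Notation w2 q := (pw (fun _ : Sm2 => mu2 q)).
Local Notation Wn x1 x2 := (pw (fun j : 'I_n => W (x1 j) (x2 j))).

Lemma pu_pmf : is_pmf pu. Proof. exact: pw_pmf. Qed.
Lemma wq_pmf : is_pmf wq. Proof. exact: pw_pmf. Qed.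
Lemma mu1_pmf q : is_pmf (mu1 q). Proof. exact: pw_pmf. Qed.
Lemma mu2_pmf q : is_pmf (mu2 q). Proof. exact: pw_pmf. Qed.
Lemma w1_pmf q : is_pmf (w1 q). Proof. apply: pw_pmf => _; exact: mu1_pmf. Qed.
Lemma w2_pmf q : is_pmf (w2 q). Proof. apply: pw_pmf => _; exact: mu2_pmf. Qed.
Lemma Wn_pmf x1 x2 : is_pmf (Wn x1 x2). Proof. exact: pw_pmf. Qed.

Definition AVc (u : Um) (F : Qn -> CB1 -> CB2 -> Yn -> R) : R :=
  EX wq (fun q => EX (w1 q) (fun C1 => EX (w2 q) (fun C2 =>
    EX (Wn (C1 (s1of u)) (C2 (s2of u))) (fun y => F q C1 C2 y)))).

Definition AV (F : Um -> Qn -> CB1 -> CB2 -> Yn -> R) : R :=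
  EX pu (fun u => AVc u (F u)).

Lemma AVc_le u F G : (forall q C1 C2 y, F q C1 C2 y <= G q C1 C2 y) -> AVc u F <= AVc u G.
Proof.
move=> h; apply: EX_le => [q|q]; first exact: pmf_ge0 wq_pmf q.
apply: EX_le => [C1|C1]; first exact: pmf_ge0 (w1_pmf q) C1.
apply: EX_le => [C2|C2]; first exact: pmf_ge0 (w2_pmf q) C2.
by apply: EX_le => [y|y]; [exact: pmf_ge0 (Wn_pmf _ _) y | exact: h].
Qed.

Lemma AV_le F G : (forall u q C1 C2 y, F u q C1 C2 y <= G u q C1 C2 y) -> AV F <= AV G.
Proof. by move=> h; apply: EX_le => [u|u]; [exact: pmf_ge0 pu_pmf u | exact: AVc_le]. Qed.

Lemma AV_ext F G : (forall u q C1 C2 y, F u q C1 C2 y = G u q C1 C2 y) -> AV F = AV G.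
Proof.
move=> h; apply: EX_ext => u; apply: EX_ext => q; apply: EX_ext => C1.
by apply: EX_ext => C2; apply: EX_ext => y; exact: h.
Qed.

Lemma AV_add F G : AV (fun u q C1 C2 y => F u q C1 C2 y + G u q C1 C2 y) = AV F + AV G.
Proof.
rewrite /AV -EX_add; apply: EX_ext => u; rewrite /AVc -EX_add; apply: EX_ext => q.
rewrite -EX_add; apply: EX_ext => C1; rewrite -EX_add; apply: EX_ext => C2.
by rewrite -EX_add.
Qed.

Lemma AVc_lin u (A : finType) (P : pred A) (c : A -> R) (G : A -> Qn -> CB1 -> CB2 -> Yn -> R) :
  AVc u (fun q C1 C2 y => \sumR_(a | P a) c a * G a q C1 C2 y) =
  \sumR_(a | P a) c a * AVc u (G a).
Proof.
rewrite /AVc; under EX_ext => q do under EX_ext => C1 do under EX_ext => C2 do rewrite EX_lin.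
under EX_ext => q do under EX_ext => C1 do rewrite EX_lin.
by under EX_ext => q do rewrite EX_lin; rewrite EX_lin.
Qed.

Lemma AV_true_codewords (F : Um -> Qn -> Xn1 -> Xn2 -> Yn -> R) :
  AV (fun u q C1 C2 y => F u q (C1 (s1of u)) (C2 (s2of u)) y) =
  EX pu (fun u => EX wq (fun q => EX (mu1 q) (fun x1 => EX (mu2 q) (fun x2 =>
     EX (Wn x1 x2) (fun y => F u q x1 x2 y))))).
Proof.
apply: EX_ext => u; apply: EX_ext => q.
have mu1_1 := fun (_ : Sm1) => pmf_sum1 (mu1_pmf q).
have mu2_1 := fun (_ : Sm2) => pmf_sum1 (mu2_pmf q).
under EX_ext => C1 do rewrite (EX_marg1 mu2_1 (s2of u)
  (fun x2 => EX (Wn (C1 (s1of u)) x2) (fun y => F u q (C1 (s1of u)) x2 y))).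
exact: (EX_marg1 mu1_1 (s1of u)
  (fun x1 => EX (mu2 q) (fun x2 => EX (Wn x1 x2) (fun y => F u q x1 x2 y)))).
Qed.

Lemma err_probE (C1 : CB1) (C2 : CB2)
    (g1 : {ffun 'I_n -> Y1} -> {ffun 'I_m -> W1} -> Sm1 * Sm2)
    (g2 : {ffun 'I_n -> Y2} -> {ffun 'I_m -> W2} -> Sm1 * Sm2) :
  err_prob p W (fun s => C1 s) (fun s => C2 s) g1 g2 =
  EX pu (fun u => EX (Wn (C1 (s1of u)) (C2 (s2of u))) (fun y =>
    ind (~~ ((g1 [ffun j => (y j).1] [ffun i => (u i).1.2] == (s1of u, s2of u)) &&
             (g2 [ffun j => (y j).2] [ffun i => (u i).2] == (s1of u, s2of u)))))).
Proof.
rewrite /err_prob rsumE /EX; apply: eq_bigr => u _.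
rewrite rprodE rsumE; congr (_ * _); apply: eq_bigr => y _.
by rewrite rprodE /ind /s1of /s2of; case: ifP.
Qed.

Lemma exists_good_code (E : Qn -> CB1 -> CB2 -> R) eps :
  EX wq (fun q => EX (w1 q) (fun C1 => EX (w2 q) (fun C2 => E q C1 C2))) < eps ->
  exists q C1 C2, E q C1 C2 < eps.
Proof.
move=> /(EX_exists_lt (pmf_ge0 wq_pmf) (pmf_sum1 wq_pmf)) [q].
move=> /(EX_exists_lt (pmf_ge0 (w1_pmf q)) (pmf_sum1 (w1_pmf q))) [C1].
move=> /(EX_exists_lt (pmf_ge0 (w2_pmf q)) (pmf_sum1 (w2_pmf q))) [C2].
by exists q, C1, C2.
Qed.

Section Receiver.
Variables (Wt Yt : finType) (sw : U -> Wt) (yp : (Y1 * Y2)%type -> Yt) (ga : R).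

Definition wv (u : Um) : {ffun 'I_m -> Wt} := [ffun i => sw (u i)].
Definition yv (y : Yn) : {ffun 'I_n -> Yt} := [ffun j => yp (y j)].

Definition src_density (r : S1 -> S2 -> Wt -> R) (w : {ffun 'I_m -> Wt}) (a : Sm1 * Sm2) : R :=
  \prodR_(i : 'I_m) r (a.1 i) (a.2 i) (w i).
Definition chan_density (k : Q -> X1 -> X2 -> Yt -> R) (q : Qn) (x1 : Xn1) (x2 : Xn2)
    (y : {ffun 'I_n -> Yt}) : R :=
  \prodR_(j : 'I_n) k (q j) (x1 j) (x2 j) (y j).

Definition passes r k (q : Qn) (C1 : CB1) (C2 : CB2) (y : {ffun 'I_n -> Yt})
    (w : {ffun 'I_m -> Wt}) (a : Sm1 * Sm2) : bool :=
  Rltb (exp ga) (src_density r w a * chan_density k q (C1 a.1) (C2 a.2) y).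

Section Densities.
Variables (r : S1 -> S2 -> Wt -> R) (k : Q -> X1 -> X2 -> Yt -> R).
Hypotheses (r_ge0 : forall a1 a2 w, 0 <= r a1 a2 w) (k_ge0 : forall q x1 x2 y, 0 <= k q x1 x2 y).

Lemma src_density_ge0 w a : 0 <= src_density r w a.
Proof. by apply: prodR_ge0 => i; exact: r_ge0. Qed.

Lemma chan_density_ge0 q x1 x2 y : 0 <= chan_density k q x1 x2 y.
Proof. by apply: prodR_ge0 => j; exact: k_ge0. Qed.

Lemma false_accept_le (P : Um -> pred (Sm1 * Sm2)) :
  AV (fun u q C1 C2 y => \sumR_(a | P u a) ind (passes r k q C1 C2 (yv y) (wv u) a))
  <= exp (- ga) * EX pu (fun u => \sumR_(a | P u a) src_density r (wv u) a *
        AVc u (fun q C1 C2 y => chan_density k q (C1 a.1) (C2 a.2) (yv y))).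
Proof.
apply: (Rle_trans _ (AV (fun u q C1 C2 y => \sumR_(a | P u a)
   (exp (- ga) * src_density r (wv u) a) * chan_density k q (C1 a.1) (C2 a.2) (yv y)))).
  apply: AV_le => u q C1 C2 y; apply: sumR_le => a _.
  have dens_ge0 := Rmult_le_pos _ _ (src_density_ge0 (wv u) a)
    (chan_density_ge0 q (C1 a.1) (C2 a.2) (yv y)).
  apply: Rle_trans (ind_markov _ dens_ge0) _.
  by rewrite Rmult_comm Rmult_assoc; apply: Rle_refl.
rewrite /AV -EX_scal; apply: Req_le; apply: EX_ext => u.
by rewrite AVc_lin big_distrr; apply: eq_bigr => a _; rewrite Rmult_assoc.
Qed.

Lemma src_density_sum_first (hr : forall a2 w, \sumR_(a : S1) r a a2 w <= 1)
    (s2 : Sm2) (w : {ffun 'I_m -> Wt}) :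
  \sumR_(a1 : Sm1) src_density r w (a1, s2) <= 1.
Proof.
rewrite (sum_ffun_prod (fun i a => r a (s2 i) (w i))); apply: prodR_le1 => i.
by split; [apply: sumR_ge0 => a _; exact: r_ge0 | exact: hr].
Qed.

Lemma src_density_sum_second (hr : forall a1 w, \sumR_(a : S2) r a1 a w <= 1)
    (s1 : Sm1) (w : {ffun 'I_m -> Wt}) :
  \sumR_(a2 : Sm2) src_density r w (s1, a2) <= 1.
Proof.
rewrite (sum_ffun_prod (fun i a => r (s1 i) a (w i))); apply: prodR_le1 => i.
by split; [apply: sumR_ge0 => a _; exact: r_ge0 | exact: hr].
Qed.

Lemma src_density_sum_both (hr : forall w, \sumR_(a : S1 * S2) r a.1 a.2 w <= 1)
    (w : {ffun 'I_m -> Wt}) :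
  \sumR_(a : Sm1 * Sm2) src_density r w a <= 1.
Proof.
rewrite sumR_pair sum_zip.
rewrite (eq_bigr (fun z : {ffun 'I_m -> S1 * S2} =>
  \prodR_(i : 'I_m) r (z i).1 (z i).2 (w i))); last first.
  by move=> z _; apply: eq_bigr => i _; rewrite !ffunE.
rewrite (sum_ffun_prod (fun i (a : S1 * S2) => r a.1 a.2 (w i))); apply: prodR_le1 => i.
by split; [apply: sumR_ge0 => a _; exact: r_ge0 | exact: hr].
Qed.

Lemma chan_density_mean_first (hk : forall q x2 y, EX (px1 q) (fun x => k q x x2 y) <= 1)
    (q : Qn) (x2 : Xn2) (y : {ffun 'I_n -> Yt}) :
  EX (mu1 q) (fun x1 => chan_density k q x1 x2 y) <= 1.
Proof.
rewrite /chan_density (@EX_prod _ _ (fun j => px1 (q j)) (fun j x => k (q j) x (x2 j) (y j))).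
apply: prodR_le1 => j.
by split; [apply: EX_ge0 => x; [exact: pmf_ge0 (Hpx1 _) x | exact: k_ge0] | exact: hk].
Qed.

Lemma chan_density_mean_second (hk : forall q x1 y, EX (px2 q) (fun x => k q x1 x y) <= 1)
    (q : Qn) (x1 : Xn1) (y : {ffun 'I_n -> Yt}) :
  EX (mu2 q) (fun x2 => chan_density k q x1 x2 y) <= 1.
Proof.
rewrite /chan_density (@EX_prod _ _ (fun j => px2 (q j)) (fun j x => k (q j) (x1 j) x (y j))).
apply: prodR_le1 => j.
by split; [apply: EX_ge0 => x; [exact: pmf_ge0 (Hpx2 _) x | exact: k_ge0] | exact: hk].
Qed.

Lemma chan_density_mean_both
    (hk : forall q y, EX (px1 q) (fun x => EX (px2 q) (fun z => k q x z y)) <= 1)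
    (q : Qn) (y : {ffun 'I_n -> Yt}) :
  EX (mu1 q) (fun x1 => EX (mu2 q) (fun x2 => chan_density k q x1 x2 y)) <= 1.
Proof.
rewrite /chan_density.
under EX_ext => x1 do
  rewrite (@EX_prod _ _ (fun j => px2 (q j)) (fun j x => k (q j) (x1 j) x (y j))).
rewrite (@EX_prod _ _ (fun j => px1 (q j))
  (fun j x => EX (px2 (q j)) (fun z => k (q j) x z (y j)))).
apply: prodR_le1 => j; split; last exact: hk.
apply: EX_ge0 => x; first exact: pmf_ge0 (Hpx1 _) x.
by apply: EX_ge0 => z; [exact: pmf_ge0 (Hpx2 _) z | exact: k_ge0].
Qed.

(* Averaged over the codebooks, the channel density of a wrong candidate
   has mean at most one: its wrong codeword(s) are independent of the
   transmitted ones. *)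
Lemma codebook_mean_first (hk : forall q x2 y, EX (px1 q) (fun x => k q x x2 y) <= 1)
    (u : Um) (a1 : Sm1) : a1 != s1of u ->
  AVc u (fun q C1 C2 y => chan_density k q (C1 a1) (C2 (s2of u)) (yv y)) <= 1.
Proof.
move=> ne; apply: EX_le1 wq_pmf _ => q.
have mu1_1 := fun _ : Sm1 => pmf_sum1 (mu1_pmf q).
have mu2_1 := fun _ : Sm2 => pmf_sum1 (mu2_pmf q).
under EX_ext => C1 do rewrite (EX_marg1 mu2_1 (s2of u)
  (fun x2 => EX (Wn (C1 (s1of u)) x2) (fun y => chan_density k q (C1 a1) x2 (yv y)))).
rewrite (EX_marg2 mu1_1 (fun x x' => EX (mu2 q) (fun x2 =>
  EX (Wn x x2) (fun y => chan_density k q x' x2 (yv y))))); last by rewrite eq_sym.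
apply: EX_le1 (mu1_pmf q) _ => x; rewrite EX_swap.
apply: EX_le1 (mu2_pmf q) _ => x2; rewrite EX_swap.
by apply: EX_le1 (Wn_pmf _ _) _ => y; exact: chan_density_mean_first.
Qed.

Lemma codebook_mean_second (hk : forall q x1 y, EX (px2 q) (fun x => k q x1 x y) <= 1)
    (u : Um) (a2 : Sm2) : a2 != s2of u ->
  AVc u (fun q C1 C2 y => chan_density k q (C1 (s1of u)) (C2 a2) (yv y)) <= 1.
Proof.
move=> ne; apply: EX_le1 wq_pmf _ => q.
have mu1_1 := fun _ : Sm1 => pmf_sum1 (mu1_pmf q).
have mu2_1 := fun _ : Sm2 => pmf_sum1 (mu2_pmf q).
under EX_ext => C1 do rewrite (EX_marg2 mu2_1 (fun z z' =>
  EX (Wn (C1 (s1of u)) z) (fun y => chan_density k q (C1 (s1of u)) z' (yv y)))) 1?eq_sym //.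
rewrite (EX_marg1 mu1_1 (s1of u) (fun x => EX (mu2 q) (fun z => EX (mu2 q) (fun z' =>
  EX (Wn x z) (fun y => chan_density k q x z' (yv y)))))).
apply: EX_le1 (mu1_pmf q) _ => x; apply: EX_le1 (mu2_pmf q) _ => z; rewrite EX_swap.
by apply: EX_le1 (Wn_pmf _ _) _ => y; exact: chan_density_mean_second.
Qed.

Lemma codebook_mean_both
    (hk : forall q y, EX (px1 q) (fun x => EX (px2 q) (fun z => k q x z y)) <= 1)
    (u : Um) (a : Sm1 * Sm2) : a.1 != s1of u -> a.2 != s2of u ->
  AVc u (fun q C1 C2 y => chan_density k q (C1 a.1) (C2 a.2) (yv y)) <= 1.
Proof.
move=> ne1 ne2; apply: EX_le1 wq_pmf _ => q.
have mu1_1 := fun _ : Sm1 => pmf_sum1 (mu1_pmf q).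
have mu2_1 := fun _ : Sm2 => pmf_sum1 (mu2_pmf q).
under EX_ext => C1 do rewrite (EX_marg2 mu2_1 (fun z z' =>
  EX (Wn (C1 (s1of u)) z) (fun y => chan_density k q (C1 a.1) z' (yv y)))) 1?eq_sym //.
rewrite (EX_marg2 mu1_1 (fun x x' => EX (mu2 q) (fun z => EX (mu2 q) (fun z' =>
  EX (Wn x z) (fun y => chan_density k q x' z' (yv y)))))); last by rewrite eq_sym.
apply: EX_le1 (mu1_pmf q) _ => x; rewrite EX_swap.
apply: EX_le1 (mu2_pmf q) _ => z.
under EX_ext => x' do rewrite EX_swap.
rewrite EX_swap; apply: EX_le1 (Wn_pmf _ _) _ => y; exact: chan_density_mean_both.
Qed.

Lemma false_accept_first (hr : forall a2 w, \sumR_(a : S1) r a a2 w <= 1)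
    (hk : forall q x2 y, EX (px1 q) (fun x => k q x x2 y) <= 1) :
  AV (fun u q C1 C2 y => \sumR_(a | (a.1 != s1of u) && (a.2 == s2of u))
        ind (passes r k q C1 C2 (yv y) (wv u) a)) <= exp (- ga).
Proof.
apply: Rle_trans (false_accept_le (fun u a => (a.1 != s1of u) && (a.2 == s2of u))) _.
rewrite -[X in _ <= X]Rmult_1_r; apply: Rmult_le_compat_l; first exact: Rlt_le (exp_pos _).
apply: EX_le1 pu_pmf _ => u.
apply: (Rle_trans _ (\sumR_(a | a.2 == s2of u) src_density r (wv u) a)).
  apply: (Rle_trans _ (\sumR_(a | (a.1 != s1of u) && (a.2 == s2of u)) src_density r (wv u) a)).
    apply: sumR_le => a /andP [ne1 /eqP e2].
    rewrite -[X in _ <= X]Rmult_1_r; apply: Rmult_le_compat_l; first exact: src_density_ge0.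
    by rewrite e2; exact: codebook_mean_first.
  by apply: sumR_le_pred => [a /andP [] | a] //; exact: src_density_ge0.
by rewrite sumR_snd_eq; exact: src_density_sum_first.
Qed.

Lemma false_accept_second (hr : forall a1 w, \sumR_(a : S2) r a1 a w <= 1)
    (hk : forall q x1 y, EX (px2 q) (fun x => k q x1 x y) <= 1) :
  AV (fun u q C1 C2 y => \sumR_(a | (a.1 == s1of u) && (a.2 != s2of u))
        ind (passes r k q C1 C2 (yv y) (wv u) a)) <= exp (- ga).
Proof.
apply: Rle_trans (false_accept_le (fun u a => (a.1 == s1of u) && (a.2 != s2of u))) _.
rewrite -[X in _ <= X]Rmult_1_r; apply: Rmult_le_compat_l; first exact: Rlt_le (exp_pos _).
apply: EX_le1 pu_pmf _ => u.
apply: (Rle_trans _ (\sumR_(a | a.1 == s1of u) src_density r (wv u) a)).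
  apply: (Rle_trans _ (\sumR_(a | (a.1 == s1of u) && (a.2 != s2of u)) src_density r (wv u) a)).
    apply: sumR_le => a /andP [/eqP e1 ne2].
    rewrite -[X in _ <= X]Rmult_1_r; apply: Rmult_le_compat_l; first exact: src_density_ge0.
    by rewrite e1; exact: codebook_mean_second.
  by apply: sumR_le_pred => [a /andP [] | a] //; exact: src_density_ge0.
by rewrite sumR_fst_eq; exact: src_density_sum_second.
Qed.

Lemma false_accept_both (hr : forall w, \sumR_(a : S1 * S2) r a.1 a.2 w <= 1)
    (hk : forall q y, EX (px1 q) (fun x => EX (px2 q) (fun z => k q x z y)) <= 1) :
  AV (fun u q C1 C2 y => \sumR_(a | (a.1 != s1of u) && (a.2 != s2of u))
        ind (passes r k q C1 C2 (yv y) (wv u) a)) <= exp (- ga).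
Proof.
apply: Rle_trans (false_accept_le (fun u a => (a.1 != s1of u) && (a.2 != s2of u))) _.
rewrite -[X in _ <= X]Rmult_1_r; apply: Rmult_le_compat_l; first exact: Rlt_le (exp_pos _).
apply: EX_le1 pu_pmf _ => u.
apply: (Rle_trans _ (\sumR_(a : Sm1 * Sm2) src_density r (wv u) a)).
  apply: (Rle_trans _ (\sumR_(a | (a.1 != s1of u) && (a.2 != s2of u)) src_density r (wv u) a)).
    apply: sumR_le => a /andP [ne1 ne2].
    rewrite -[X in _ <= X]Rmult_1_r; apply: Rmult_le_compat_l; first exact: src_density_ge0.
    exact: codebook_mean_both.
  by apply: sumR_le_pred => // a; exact: src_density_ge0.
exact: src_density_sum_both.
Qed.

End Densities.

Local Notation P := (in_joint pq px1 px2 W).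

Definition src_letter (r : S1 -> S2 -> Wt -> R) (t : U) : R := r t.1.1.1 t.1.1.2 (sw t).
Definition chan_letter (k : Q -> X1 -> X2 -> Yt -> R) (l : Q * X1 * X2 * (Y1 * Y2)) : R :=
  k l.1.1.1 l.1.1.2 l.1.2 (yp l.2).
Definition log_mean r k : R :=
  INR m * lmean p (src_letter r) + INR n * lmean P (chan_letter k).
Definition log_var r k : R :=
  INR m * lvar p (src_letter r) + INR n * lvar P (chan_letter k).

Lemma true_pair_rejected r k :
  (forall t, 0 < p t -> 0 < src_letter r t) -> (forall l, 0 < P l -> 0 < chan_letter k l) ->
  ga < log_mean r k ->
  AV (fun u q C1 C2 y => ind (~~ passes r k q C1 C2 (yv y) (wv u) (s1of u, s2of u)))
  <= 2 * log_var r k / ((log_mean r k - ga) * (log_mean r k - ga)).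
Proof.
move=> r_pos k_pos ga_lt.
pose F (u : Um) (q : Qn) (x1 : Xn1) (x2 : Xn2) (y : Yn) :=
  ind (~~ Rltb (exp ga) ((\prodR_(i : 'I_m) src_letter r (u i)) *
                         \prodR_(j : 'I_n) k (q j) (x1 j) (x2 j) (yp (y j)))).
rewrite (AV_ext (G := fun u q C1 C2 y => F u q (C1 (s1of u)) (C2 (s2of u)) y)); last first.
  move=> u q C1 C2 y; rewrite /passes /src_density /chan_density.
  congr (ind (~~ Rltb _ (_ * _))); apply: eq_bigr => i _; by rewrite !ffunE.
rewrite AV_true_codewords; under EX_ext => u do rewrite EX_block_joint.
have [P0 P1] := in_joint_pmf Hpq Hpx1 Hpx2 HW; rewrite rsumE in P1.
apply: Rle_trans (tail_bound (pmf_ge0 Hp) (pmf_sum1 Hp) P0 P1 r_pos k_pos ga_lt); apply: Req_le.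
apply: EX_ext => u; apply: EX_ext => l; rewrite /F.
by congr (ind (~~ Rltb _ (_ * _))); apply: eq_bigr => j _; rewrite !ffunE.
Qed.

Definition r_first (a1 : S1) (a2 : S2) (w : Wt) : R :=
  cprob p (fun u : U => u.1.1.1) (fun u : U => (u.1.1.2, sw u)) a1 (a2, w).
Definition r_second (a1 : S1) (a2 : S2) (w : Wt) : R :=
  cprob p (fun u : U => u.1.1.2) (fun u : U => (u.1.1.1, sw u)) a2 (a1, w).
Definition r_both (a1 : S1) (a2 : S2) (w : Wt) : R :=
  cprob p (fun u : U => (u.1.1.1, u.1.1.2)) sw (a1, a2) w.

Local Notation L := (Q * X1 * X2 * (Y1 * Y2))%type.
Definition k_first (q : Q) (x1 : X1) (x2 : X2) (y : Yt) : R :=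
  lratio P (fun t : L => t.1.1.2) (fun t : L => (t.1.2, t.1.1.1))
    (fun t : L => yp t.2) x1 (x2, q) y.
Definition k_second (q : Q) (x1 : X1) (x2 : X2) (y : Yt) : R :=
  lratio P (fun t : L => t.1.2) (fun t : L => (t.1.1.2, t.1.1.1))
    (fun t : L => yp t.2) x2 (x1, q) y.
Definition k_both (q : Q) (x1 : X1) (x2 : X2) (y : Yt) : R :=
  lratio P (fun t : L => (t.1.1.2, t.1.2)) (fun t : L => t.1.1.1)
    (fun t : L => yp t.2) (x1, x2) q y.

Definition receiver_decoder (d : Sm1 * Sm2) (q : Qn) (C1 : CB1) (C2 : CB2)
    (y : {ffun 'I_n -> Yt}) (w : {ffun 'I_m -> Wt}) : Sm1 * Sm2 :=
  threshold_decoder (passes r_first k_first q C1 C2 y w) (passes r_second k_second q C1 C2 y w)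
    (passes r_both k_both q C1 C2 y w) d.

Definition cheb_bound r k : R :=
  2 * log_var r k / ((log_mean r k - ga) * (log_mean r k - ga)).

Let p_ge0 := pmf_ge0 Hp.
Let P_ge0 := in_joint_ge0 Hpq Hpx1 Hpx2 HW.

(* Normalizations: each source density is a conditional pmf of the wrong
   component(s), and each likelihood ratio has mean at most one under the
   input law of the wrong codeword(s), by the conditional independence of
   the inputs given the time-sharing letter. *)
Lemma r_first_sum a2 w : \sumR_(a : S1) r_first a a2 w <= 1.
Proof. exact: cprob_sum_le1. Qed.

Lemma r_second_sum a1 w : \sumR_(a : S2) r_second a1 a w <= 1.
Proof. exact: cprob_sum_le1. Qed.

Lemma r_both_sum w : \sumR_(a : S1 * S2) r_both a.1 a.2 w <= 1.
Proof.
rewrite (eq_bigr (fun a => cprob p (fun u : U => (u.1.1.1, u.1.1.2)) sw a w)).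
  exact: cprob_sum_le1.
by move=> [a1 a2].
Qed.

Lemma k_first_mean q x2 y : EX (px1 q) (fun x => k_first q x x2 y) <= 1.
Proof.
apply: (lratio_mean_le1 P_ge0) => [x|x]; first exact: pmf_ge0 (Hpx1 q) x.
exact: x1_indep.
Qed.

Lemma k_second_mean q x1 y : EX (px2 q) (fun x => k_second q x1 x y) <= 1.
Proof.
apply: (lratio_mean_le1 P_ge0) => [x|x]; first exact: pmf_ge0 (Hpx2 q) x.
exact: x2_indep.
Qed.

Lemma k_both_mean q y : EX (px1 q) (fun x => EX (px2 q) (fun z => k_both q x z y)) <= 1.
Proof.
rewrite -(EX_pair (px1 q) (px2 q) (fun a => k_both q a.1 a.2 y)).
apply: (lratio_mean_le1 P_ge0) => [[x z]|[x z]] /=.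
  by apply: Rmult_le_pos; [exact: pmf_ge0 (Hpx1 q) x | exact: pmf_ge0 (Hpx2 q) z].
exact: x12_indep.
Qed.

Lemma receiver_error_le d :
  ga < log_mean r_first k_first -> ga < log_mean r_second k_second ->
  ga < log_mean r_both k_both ->
  AV (fun u q C1 C2 y => ind (receiver_decoder d q C1 C2 (yv y) (wv u) != (s1of u, s2of u)))
  <= cheb_bound r_first k_first + cheb_bound r_second k_second + cheb_bound r_both k_both
     + 3 * exp (- ga).
Proof.
move=> lt1 lt2 lt3.
have r1_0 a1 a2 w : 0 <= r_first a1 a2 w by exact: cprob_ge0.
have r2_0 a1 a2 w : 0 <= r_second a1 a2 w by exact: cprob_ge0.
have r3_0 a1 a2 w : 0 <= r_both a1 a2 w by exact: cprob_ge0.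
have k1_0 q x1 x2 y : 0 <= k_first q x1 x2 y by exact: lratio_ge0.
have k2_0 q x1 x2 y : 0 <= k_second q x1 x2 y by exact: lratio_ge0.
have k3_0 q x1 x2 y : 0 <= k_both q x1 x2 y by exact: lratio_ge0.
apply: Rle_trans.
  by apply: AV_le => u q C1 C2 y; exact: threshold_decoder_error.
rewrite !AV_add.
have t1 := true_pair_rejected (r := r_first) (k := k_first)
  (fun t h => cprob_gt0 p_ge0 _ _ h) (fun l h => lratio_gt0 P_ge0 _ _ _ h) lt1.
have t2 := true_pair_rejected (r := r_second) (k := k_second)
  (fun t h => cprob_gt0 p_ge0 _ _ h) (fun l h => lratio_gt0 P_ge0 _ _ _ h) lt2.
have t3 := true_pair_rejected (r := r_both) (k := k_both)
  (fun t h => cprob_gt0 p_ge0 _ _ h) (fun l h => lratio_gt0 P_ge0 _ _ _ h) lt3.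
have f1 := false_accept_first r1_0 k1_0 r_first_sum k_first_mean.
have f2 := false_accept_second r2_0 k2_0 r_second_sum k_second_mean.
have f3 := false_accept_both r3_0 k3_0 r_both_sum k_both_mean.
apply: (Rle_trans _ (cheb_bound r_first k_first + cheb_bound r_second k_second
  + cheb_bound r_both k_both + exp (- ga) + exp (- ga) + exp (- ga))); last lra.
apply: (Rplus_le_compat _ _ _ _ _ f3); apply: (Rplus_le_compat _ _ _ _ _ f2).
apply: (Rplus_le_compat _ _ _ _ _ f1); apply: (Rplus_le_compat _ _ _ _ _ t3).
exact: Rplus_le_compat t1 t2.
Qed.

Lemma src_letter_means :
  [/\ lmean p (src_letter r_first) =
        - cond_entropy p (fun u : U => u.1.1.1) (fun u : U => (u.1.1.2, sw u)),
      lmean p (src_letter r_second) =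
        - cond_entropy p (fun u : U => u.1.1.2) (fun u : U => (u.1.1.1, sw u))
    & lmean p (src_letter r_both) = - cond_entropy p (fun u : U => (u.1.1.1, u.1.1.2)) sw].
Proof. by split; exact: lmean_cprob. Qed.

Lemma chan_letter_means :
  [/\ lmean P (chan_letter k_first) =
        cond_mutinf P (fun t : L => t.1.1.2) (fun t : L => yp t.2) (fun t : L => (t.1.2, t.1.1.1)),
      lmean P (chan_letter k_second) =
        cond_mutinf P (fun t : L => t.1.2) (fun t : L => yp t.2) (fun t : L => (t.1.1.2, t.1.1.1))
    & lmean P (chan_letter k_both) =
        cond_mutinf P (fun t : L => (t.1.1.2, t.1.2)) (fun t : L => yp t.2) (fun t : L => t.1.1.1)].
Proof. by split; exact: (lmean_lratio P_ge0). Qed.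

Definition receiver_const (b th : R) : R :=
  2 * (lvar p (src_letter r_first) + b * lvar P (chan_letter k_first)) / (th * th)
  + 2 * (lvar p (src_letter r_second) + b * lvar P (chan_letter k_second)) / (th * th)
  + 2 * (lvar p (src_letter r_both) + b * lvar P (chan_letter k_both)) / (th * th) + 3 / th.

Lemma receiver_error_small d b th :
  0 < b -> 0 < th -> 0 < INR m -> INR n = b * INR m -> ga = INR m * th ->
  2 * th <= b * cond_mutinf P (fun t : L => t.1.1.2)
              (fun t : L => yp t.2) (fun t : L => (t.1.2, t.1.1.1))
            - cond_entropy p (fun u : U => u.1.1.1) (fun u : U => (u.1.1.2, sw u)) ->
  2 * th <= b * cond_mutinf P (fun t : L => t.1.2)
              (fun t : L => yp t.2) (fun t : L => (t.1.1.2, t.1.1.1))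
            - cond_entropy p (fun u : U => u.1.1.2) (fun u : U => (u.1.1.1, sw u)) ->
  2 * th <= b * cond_mutinf P (fun t : L => (t.1.1.2, t.1.2))
              (fun t : L => yp t.2) (fun t : L => t.1.1.1)
            - cond_entropy p (fun u : U => (u.1.1.1, u.1.1.2)) sw ->
  AV (fun u q C1 C2 y => ind (receiver_decoder d q C1 C2 (yv y) (wv u) != (s1of u, s2of u)))
  <= receiver_const b th / INR m.
Proof.
move=> hb hth hm hn hga gap1 gap2 gap3.
have [ez1 ez2 ez3] := src_letter_means; have [ev1 ev2 ev3] := chan_letter_means.
have [lt1 c1] := cheb_linear_regime (ez := lmean p (src_letter r_first))
  (ev := lmean P (chan_letter k_first)) hm hn hb
  (lvar_ge0 (src_letter r_first) p_ge0) (lvar_ge0 (chan_letter k_first) P_ge0) hth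
  (ltac:(rewrite ez1 ev1; lra)) hga.
have [lt2 c2] := cheb_linear_regime (ez := lmean p (src_letter r_second))
  (ev := lmean P (chan_letter k_second)) hm hn hb
  (lvar_ge0 (src_letter r_second) p_ge0) (lvar_ge0 (chan_letter k_second) P_ge0) hth
  (ltac:(rewrite ez2 ev2; lra)) hga.
have [lt3 c3] := cheb_linear_regime (ez := lmean p (src_letter r_both))
  (ev := lmean P (chan_letter k_both)) hm hn hb
  (lvar_ge0 (src_letter r_both) p_ge0) (lvar_ge0 (chan_letter k_both) P_ge0) hth
  (ltac:(rewrite ez3 ev3; lra)) hga.
have hexp : exp (- ga) <= 1 / th / INR m.
  rewrite hga; apply: Rle_trans (exp_neg_le_inv _) _; first nra.
  by apply: Req_le; field; lra.
apply: Rle_trans (receiver_error_le d lt1 lt2 lt3) _.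
rewrite /cheb_bound /log_var /log_mean /receiver_const !Rdiv_plus_distr.
lra.
Qed.

End Receiver.

Lemma ensemble_error_two_receivers
    (g1 : Qn -> CB1 -> CB2 -> {ffun 'I_n -> Y1} -> {ffun 'I_m -> W1} -> Sm1 * Sm2)
    (g2 : Qn -> CB1 -> CB2 -> {ffun 'I_n -> Y2} -> {ffun 'I_m -> W2} -> Sm1 * Sm2) :
  EX wq (fun q => EX (w1 q) (fun C1 => EX (w2 q) (fun C2 =>
    err_prob p W (fun s => C1 s) (fun s => C2 s) (g1 q C1 C2) (g2 q C1 C2))))
  <= AV (fun u q C1 C2 y => ind (g1 q C1 C2 [ffun j => (y j).1] [ffun i => (u i).1.2]
                                 != (s1of u, s2of u)))
   + AV (fun u q C1 C2 y => ind (g2 q C1 C2 [ffun j => (y j).2] [ffun i => (u i).2]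
                                 != (s1of u, s2of u))).
Proof.
under EX_ext => q do under EX_ext => C1 do under EX_ext => C2 do rewrite err_probE.
under EX_ext => q do under EX_ext => C1 do rewrite EX_swap.
under EX_ext => q do rewrite EX_swap.
rewrite EX_swap -AV_add; apply: AV_le => u q C1 C2 y.
by rewrite /ind; do 2 case: (_ == _); rewrite /=; lra.
Qed.

End RandomCode.

Unset Implicit Arguments.

(* Main theorem: choose a common margin th for the six rate conditions,
   block lengths along the rate b long enough for the O(1/m) ensemble
   bound to drop below eps, and extract a good code from the ensemble. *)
Theorem theorem5 (S1 S2 W1 W2 X1 X2 Y1 Y2 : finType)
    (p : src S1 S2 W1 W2 -> R) (W : X1 -> X2 -> (Y1 * Y2)%type -> R) (b : R)
    (Hb : exists m0 n0 : nat, (0 < m0)%nat /\ (0 < n0)%nat /\ INR n0 / INR m0 = b)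
    (Hp : is_pmf p) (HW : forall x1 x2, is_pmf (W x1 x2))
    (Q : finType) (HQ : is_true (leq #|Q| 4))
    (pq : Q -> R) (px1 : Q -> X1 -> R) (px2 : Q -> X2 -> R)
    (Hpq : is_pmf pq) (Hpx1 : forall q, is_pmf (px1 q)) (Hpx2 : forall q, is_pmf (px2 q)) :
  let P := in_joint pq px1 px2 W in
  let vQ := fun t : (Q * X1 * X2 * (Y1 * Y2))%type => t.1.1.1 in
  let vX1 := fun t : (Q * X1 * X2 * (Y1 * Y2))%type => t.1.1.2 in
  let vX2 := fun t : (Q * X1 * X2 * (Y1 * Y2))%type => t.1.2 in
  let vY1 := fun t : (Q * X1 * X2 * (Y1 * Y2))%type => t.2.1 in
  let vY2 := fun t : (Q * X1 * X2 * (Y1 * Y2))%type => t.2.2 in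
  let sS1 := fun u : src S1 S2 W1 W2 => u.1.1.1 in
  let sS2 := fun u : src S1 S2 W1 W2 => u.1.1.2 in
  let sW1 := fun u : src S1 S2 W1 W2 => u.1.2 in
  let sW2 := fun u : src S1 S2 W1 W2 => u.2 in
  (* receiver 1 *)
  cond_entropy p sS1 (fun u => (sS2 u, sW1 u))
    < b * cond_mutinf P vX1 vY1 (fun t => (vX2 t, vQ t)) ->
  cond_entropy p sS2 (fun u => (sS1 u, sW1 u))
    < b * cond_mutinf P vX2 vY1 (fun t => (vX1 t, vQ t)) ->
  cond_entropy p (fun u => (sS1 u, sS2 u)) sW1
    < b * cond_mutinf P (fun t => (vX1 t, vX2 t)) vY1 vQ ->
  (* receiver 2 *)
  cond_entropy p sS1 (fun u => (sS2 u, sW2 u))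
    < b * cond_mutinf P vX1 vY2 (fun t => (vX2 t, vQ t)) ->
  cond_entropy p sS2 (fun u => (sS1 u, sW2 u))
    < b * cond_mutinf P vX2 vY2 (fun t => (vX1 t, vQ t)) ->
  cond_entropy p (fun u => (sS1 u, sS2 u)) sW2
    < b * cond_mutinf P (fun t => (vX1 t, vX2 t)) vY2 vQ ->
  achievable p W b.
Proof.
move=> P vQ vX1 vX2 vY1 vY2 sS1 sS2 sW1 sW2 H1 H2 H3 H4 H5 H6 eps eps_pos.
have [m0 [n0 [m0_pos [n0_pos rate]]]] := Hb.
have [s0] := pmf_inhabited Hp.
have b_pos : 0 < b.
  by rewrite -rate; apply: Rdiv_lt_0_compat; apply: lt_0_INR; apply/ltP.
have [th [th_pos [[g1 [g2 g3]] [g4 [g5 g6]]]]] := common_margin6 (Rgt_minus _ _ H1)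
  (Rgt_minus _ _ H2) (Rgt_minus _ _ H3) (Rgt_minus _ _ H4) (Rgt_minus _ _ H5) (Rgt_minus _ _ H6).
pose K := receiver_const p W pq px1 px2 sW1 (fun y => y.1) b th
        + receiver_const p W pq px1 px2 sW2 (fun y => y.2) b th.
have [k [rate_k small]] := long_blocks K m0_pos rate eps_pos.
set m := (k.+1 * m0)%nat in rate_k small *; set n := (k.+1 * n0)%nat in rate_k *.
have m_pos : 0 < INR m by apply: lt_0_INR; apply/ltP; rewrite muln_gt0 m0_pos.
exists m, n; split; first by rewrite muln_gt0 m0_pos.
split; first by rewrite muln_gt0 n0_pos.
split; first by rewrite rate_k; field; lra.
pose d := ([ffun=> s0.1.1.1], [ffun=> s0.1.1.2]) : {ffun 'I_m -> S1} * {ffun 'I_m -> S2}.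
pose dec1 := receiver_decoder p W pq px1 px2 (n := n) sW1 (fun y => y.1) (INR m * th) d.
pose dec2 := receiver_decoder p W pq px1 px2 (n := n) sW2 (fun y => y.2) (INR m * th) d.
have err1 := receiver_error_small Hp HW Hpq Hpx1 Hpx2 (sw := sW1) (yp := fun y => y.1) d
  b_pos th_pos m_pos rate_k (erefl _) g1 g2 g3.
have err2 := receiver_error_small Hp HW Hpq Hpx1 Hpx2 (sw := sW2) (yp := fun y => y.2) d
  b_pos th_pos m_pos rate_k (erefl _) g4 g5 g6.
have avg := Rle_trans _ _ _ (ensemble_error_two_receivers Hp HW Hpq Hpx1 Hpx2 dec1 dec2)
  (Rplus_le_compat _ _ _ _ err1 err2).
rewrite -Rdiv_plus_distr -/K in avg.
have [q [C1 [C2 err]]] := exists_good_code Hpq Hpx1 Hpx2 (Rle_lt_trans _ _ _ avg small).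
by exists (fun s => C1 s), (fun s => C2 s), (dec1 q C1 C2), (dec2 q C1 C2).
Qed.
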